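(* Let $D$ be a linear differential operator of order $k$, ${\bf z}\in\mathbb{R}^d$, ${\bf X}=\{{\bf x}_1,\dots,{\bf x}_N\}$, $\mu\ge0$, $q>k$, and let ${\bf w}={\bf w}^{1,\mu}$ be the weight vector of a $\|\cdot\|_{1,\mu}$-minimal formula of order $q$; assume ${\bf X}_{\bf w}\setminus\{{\bf z}\}\ne\emptyset$. Let $\Omega$ be a domain containing $S_{{\bf z},{\bf X}}$. Then for every $r\in\{k,\dots,q-1\}$, $\gamma\in(0,1]$ and $f\in C^{r,\gamma}(\Omega)$, $$\Big|Df({\bf z})-\sum_{j=1}^Nw_jf({\bf x}_j)\Big|\le\rho_{q,D}({\bf z},{\bf X},1,\mu)\,h_{{\bf z},{\bf X}_{\bf w}}^{\,r+\gamma-\mu}\,|f|_{r,\gamma,\Omega}\quad\text{if }0\le\mu\le r+\gamma,$$ $$\Big|Df({\bf z})-\sum_{j=1}^Nw_jf({\bf x}_j)\Big|\le\rho_{q,D}({\bf z},{\bf X},1,\mu)\,s_{{\bf z},{\bf X}_{\bf w}}^{\,r+\gamma-\mu}\,|f|_{r,\gamma,\Omega}\quad\text{if }\mu>r+\gamma.$$ In particular, for $\mu=r+\gamma$ the error is at most $\rho_{q,D}({\bf z},{\bf X},1,r+\gamma)\,|f|_{r,\gamma,\Omega}$.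
   Context: $\Pi^d_q$: real polynomials in $d$ variables of total degree $<q$. $Df=\sum_{|\alpha|\le k}c_\alpha\partial^\alpha f$, real coefficients, $\sum_{|\alpha|=k}|c_\alpha({\bf z})|\ne0$. ${\bf X}$ consists of distinct points; ${\bf w}$ is exact of order $q$ if $Dp({\bf z})=\sum_jw_jp({\bf x}_j)$ for all $p\in\Pi^d_q$. $\|{\bf w}\|_{1,\mu}:=\sum_j|w_j|\,\|{\bf x}_j-{\bf z}\|_2^\mu$ (convention $\|{\bf x}_j-{\bf z}\|_2^0:=1$); a $\|\cdot\|_{1,\mu}$-minimal formula of order $q$ is an exact-of-order-$q$ formula minimizing $\|{\bf w}\|_{1,\mu}$. $\rho_{q,D}({\bf z},{\bf X},1,\mu):=\inf\{\|{\bf w}\|_{1,\mu}:{\bf w}\text{ exact of order }q\}$ (equivalently $\sup\{Dp({\bf z}):p\in\Pi^d_q,\ |p({\bf x}_j)|\le\|{\bf x}_j-{\bf z}\|_2^\mu\ \forall j\}$). ${\bf X}_{\bf w}:=\{{\bf x}_j\in{\bf X}:w_j\ne0\}$; $h_{{\bf z},{\bf Y}}:=\max_{{\bf y}\in{\bf Y}}\|{\bf y}-{\bf z}\|_2$; $s_{{\bf z},{\bf Y}}:=\min_{{\bf y}\in{\bf Y}\setminus\{{\bf z}\}}\|{\bf y}-{\bf z}\|_2$. $S_{{\bf z},{\bf X}}:=\bigcup_i[{\bf z},{\bf x}_i]$. A domain is an open connected set. $|g|_{\gamma,\Omega}:=\sup_{{\bf x}\ne{\bf y}\in\Omega}|g({\bf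 x})-g({\bf y})|/\|{\bf x}-{\bf y}\|_2^\gamma$; $C^{r,\gamma}(\Omega)$: $r$ times continuously differentiable $f$ with $|\partial^\alpha f|_{\gamma,\Omega}<\infty$ for $|\alpha|=r$; $|f|_{r,\gamma,\Omega}:=\frac{1}{(\gamma+1)\cdots(\gamma+r)}\big(\sum_{|\alpha|=r}\frac{r!}{\alpha!}|\partial^\alpha f|_{\gamma,\Omega}^2\big)^{1/2}$. *)

From Stdlib Require Import Reals Lra Lia List Arith.
Import ListNotations.
Open Scope R_scope.

(* Points of R^d are functions nat -> R; only coordinates 0..d-1 matter. *)
Definition Pt := nat -> R.

Definition sumN (n : nat) (g : nat -> R) : R :=
  fold_right Rplus 0 (map g (seq 0 n)).

Definition sumL {A : Type} (l : list A) (g : A -> R) : R :=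
  fold_right Rplus 0 (map g l).

Definition edist (d : nat) (x y : Pt) : R :=
  sqrt (sumN d (fun i => (x i - y i) ^ 2)).

Definition pt_eq (d : nat) (x y : Pt) : Prop := forall i, (i < d)%nat -> x i = y i.

(* a^b with the convention 0^0 := 1 (and 0^b = 0 for b <> 0) *)
Definition rpow (a b : R) : R :=
  if Req_EM_T a 0 then (if Req_EM_T b 0 then 1 else 0) else Rpower a b.

(* Multi-indices: lists of length d (canonical representation). *)
Definition MI := list nat.

Fixpoint mi (d n : nat) : list MI :=
  match d with
  | O => match n with O => [nil] | S _ => nil end
  | S d' => flat_map (fun k => map (fun b => k :: b) (mi d' (n - k))) (seq 0 (S n))
  end.

Definition mi_lt (d q : nat) : list MI := flat_map (mi d) (seq 0 q).

Definition mi_abs (a : MI) : nat := list_sum a.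
Definition mi_fact (a : MI) : nat := fold_right Nat.mul 1%nat (map fact a).

Fixpoint incr (a : MI) (i : nat) : MI :=
  match a, i with
  | nil, _ => nil
  | x :: t, O => S x :: t
  | x :: t, S i' => x :: incr t i'
  end.

Definition upd (x : Pt) (i : nat) (t : R) : Pt :=
  fun m => if Nat.eqb m i then t else x m.

Fixpoint monoAux (a : MI) (i : nat) (x : Pt) : R :=
  match a with
  | nil => 1
  | e :: t => x i ^ e * monoAux t (S i) x
  end.
Definition mono (a : MI) (x : Pt) : R := monoAux a 0 x.

Definition poly (d q : nat) (cf : MI -> R) (x : Pt) : R :=
  sumL (mi_lt d q) (fun a => cf a * mono a x).

Definition IsOpen (d : nat) (O : Pt -> Prop) : Prop :=
  forall x, O x -> exists e, 0 < e /\ forall y, edist d y x < e -> O y.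

Definition IsConnected (d : nat) (O : Pt -> Prop) : Prop :=
  forall U V, IsOpen d U -> IsOpen d V ->
    (forall x, O x -> U x \/ V x) -> (forall x, ~ (O x /\ U x /\ V x)) ->
    (forall x, O x -> U x) \/ (forall x, O x -> V x).

Definition IsDomain (d : nat) (O : Pt -> Prop) : Prop := IsOpen d O /\ IsConnected d O.

Definition ContOn (d : nat) (O : Pt -> Prop) (g : Pt -> R) : Prop :=
  forall x, O x -> forall eps, 0 < eps -> exists del, 0 < del /\
    forall y, O y -> edist d y x < del -> Rabs (g y - g x) < eps.

(* F is the family of partial derivatives (F alpha = d^alpha f) of f on O, up to
   order r, all continuous on O: i.e. f is in C^r(O) with these derivatives. *)
Definition DerivFamily (d : nat) (O : Pt -> Prop) (r : nat) (f : Pt -> R)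
    (F : MI -> Pt -> R) : Prop :=
  (forall x, O x -> F (repeat 0%nat d) x = f x) /\
  (forall a, length a = d -> (mi_abs a <= r)%nat -> ContOn d O (F a)) /\
  (forall a i x, length a = d -> (mi_abs a < r)%nat -> (i < d)%nat -> O x ->
     derivable_pt_lim (fun t => F a (upd x i t)) (x i) (F (incr a i) x)).

Definition Dop (d k : nat) (c : MI -> R) (F : MI -> Pt -> R) (z : Pt) : R :=
  sumL (mi_lt d (S k)) (fun a => c a * F a z).

Definition Exact (d N : nat) (X : nat -> Pt) (k : nat) (c : MI -> R) (z : Pt)
    (q : nat) (w : nat -> R) : Prop :=
  forall cf F, DerivFamily d (fun _ => True) k (poly d q cf) F ->
    Dop d k c F z = sumN N (fun j => w j * poly d q cf (X j)).

Definition norm1mu (d N : nat) (X : nat -> Pt) (z : Pt) (mu : R) (w : nat -> R) : R :=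
  sumN N (fun j => Rabs (w j) * rpow (edist d (X j) z) mu).

Definition IsMinimal (d N : nat) (X : nat -> Pt) (k : nat) (c : MI -> R) (z : Pt)
    (q : nat) (mu : R) (w : nat -> R) : Prop :=
  Exact d N X k c z q w /\
  forall w', Exact d N X k c z q w' -> norm1mu d N X z mu w <= norm1mu d N X z mu w'.

Definition IsInf (E : R -> Prop) (m : R) : Prop :=
  (forall x, E x -> m <= x) /\ (forall b, (forall x, E x -> b <= x) -> b <= m).

Definition IsMax (E : R -> Prop) (m : R) : Prop := E m /\ forall x, E x -> x <= m.
Definition IsMin (E : R -> Prop) (m : R) : Prop := E m /\ forall x, E x -> m <= x.

Definition HolderSet (d : nat) (O : Pt -> Prop) (gam : R) (g : Pt -> R) : R -> Prop :=
  fun v => exists x y, O x /\ O y /\ ~ pt_eq d x y /\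
    v = Rabs (g x - g y) / rpow (edist d x y) gam.

(* |f|_{r,gamma,O} given the Hoelder seminorms M a of the r-th derivatives *)
Definition semi (d r : nat) (gam : R) (M : MI -> R) : R :=
  / fold_right Rmult 1 (map (fun i => gam + INR i) (seq 1 r)) *
  sqrt (sumL (mi d r) (fun a => INR (fact r) / INR (mi_fact a) * (M a) ^ 2)).

(* Taylor's theorem with Hoelder remainder, taken along the segment [z, x_j], gives
   |f(x_j) - T(x_j)| <= |f|_{r,gamma} ||x_j - z||^(r+gamma), where T is the Taylor
   polynomial of degree r at z.  In one variable the remainder is controlled by
   integrating the Hoelder bound r times, which produces the factor
   1/((gamma+1)...(gamma+r)); the r-th derivative along the segment is a multinomial
   sum over |alpha| = r, handled by Cauchy-Schwarz and the multinomial theorem.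
   Since r < q, the formula is exact on T, so the error equals sum_j w_j (T - f)(x_j)
   and is at most |f|_{r,gamma} sum_j |w_j| ||x_j - z||^mu ||x_j - z||^(r+gamma-mu).
   The last factor is at most h^(r+gamma-mu) when mu <= r+gamma and at most
   s^(r+gamma-mu) otherwise, and by minimality sum_j |w_j| ||x_j - z||^mu = rho. *)

From Stdlib Require Import Reals List Lra Lia Arith FunctionalExtensionality.
From Coquelicot Require Import Coquelicot.
Import ListNotations.
Open Scope R_scope.

(** * Finite sums *)

Lemma sumL_nil {A} (g : A -> R) : sumL nil g = 0.
Proof. reflexivity. Qed.

Lemma sumL_cons {A} (x : A) l g : sumL (x :: l) g = g x + sumL l g.
Proof. reflexivity. Qed.

Lemma sumL_app {A} (l1 l2 : list A) g : sumL (l1 ++ l2) g = sumL l1 g + sumL l2 g.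
Proof. induction l1; rewrite ?sumL_cons; unfold sumL in *; simpl in *; lra. Qed.

Lemma sumL_map {A B} (h : A -> B) l g : sumL (map h l) g = sumL l (fun x => g (h x)).
Proof. induction l; unfold sumL in *; simpl; [lra | rewrite IHl; lra]. Qed.

Lemma sumL_flat_map {A B} (f : A -> list B) l g :
  sumL (flat_map f l) g = sumL l (fun x => sumL (f x) g).
Proof. induction l; simpl; [reflexivity|]. rewrite sumL_app, sumL_cons, IHl; reflexivity. Qed.

Lemma sumL_ext_in {A} (l : list A) g g' :
  (forall x, In x l -> g x = g' x) -> sumL l g = sumL l g'.
Proof.
  induction l; intros H; [reflexivity|].
  rewrite !sumL_cons, H, IHl; auto; [intros; apply H|]; simpl; auto.
Qed.

Lemma sumL_plus {A} (l : list A) g g' : sumL l (fun x => g x + g' x) = sumL l g + sumL l g'.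
Proof. induction l; [unfold sumL; simpl; lra|]. rewrite !sumL_cons, IHl; lra. Qed.

Lemma sumL_minus {A} (l : list A) g g' : sumL l (fun x => g x - g' x) = sumL l g - sumL l g'.
Proof. induction l; [unfold sumL; simpl; lra|]. rewrite !sumL_cons, IHl; lra. Qed.

Lemma sumL_scal {A} (l : list A) c g : sumL l (fun x => c * g x) = c * sumL l g.
Proof. induction l; [unfold sumL; simpl; lra|]. rewrite !sumL_cons, IHl; lra. Qed.

Lemma sumL_zero {A} (l : list A) : sumL l (fun _ => 0) = 0.
Proof. induction l; [reflexivity|]. rewrite sumL_cons, IHl; lra. Qed.

Lemma sumL_le {A} (l : list A) g g' :
  (forall x, In x l -> g x <= g' x) -> sumL l g <= sumL l g'.
Proof.
  induction l; intros H; [unfold sumL; simpl; lra|]. rewrite !sumL_cons.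
  assert (g a <= g' a) by (apply H; simpl; auto).
  assert (sumL l g <= sumL l g') by (apply IHl; intros; apply H; simpl; auto). lra.
Qed.

Lemma sumL_nonneg {A} (l : list A) g : (forall x, In x l -> 0 <= g x) -> 0 <= sumL l g.
Proof. intros H. rewrite <- (sumL_zero l). apply sumL_le; auto. Qed.

Lemma sumL_abs {A} (l : list A) g : Rabs (sumL l g) <= sumL l (fun x => Rabs (g x)).
Proof.
  induction l; [unfold sumL; simpl; rewrite Rabs_R0; lra|]. rewrite !sumL_cons.
  eapply Rle_trans; [apply Rabs_triang|]. lra.
Qed.

Lemma sumL_swap {A B} (l1 : list A) (l2 : list B) g :
  sumL l1 (fun a => sumL l2 (fun b => g a b)) = sumL l2 (fun b => sumL l1 (fun a => g a b)).
Proof.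
  induction l1; simpl.
  - rewrite sumL_nil. symmetry. apply sumL_zero.
  - rewrite sumL_cons, IHl1, <- sumL_plus. apply sumL_ext_in; intros. rewrite sumL_cons; reflexivity.
Qed.

Lemma sumL_delta {A} (eq_dec : forall x y : A, {x = y} + {x <> y}) (l : list A) a g :
  NoDup l -> In a l -> sumL l (fun b => if eq_dec b a then g b else 0) = g a.
Proof.
  induction l as [|x l IH]; intros Hnd Hin; [destruct Hin|].
  inversion Hnd; subst. rewrite sumL_cons. destruct (eq_dec x a) as [->|Hne].
  - rewrite (sumL_ext_in _ _ (fun _ => 0)), sumL_zero; [lra|].
    intros y Hy. destruct (eq_dec y a); [subst; contradiction | reflexivity].
  - destruct Hin as [->|Hin]; [congruence|]. rewrite IH; auto; lra.
Qed.

Lemma cauchy_schwarz_sq {A} (l : list A) (w u v : A -> R) : (forall x, In x l -> 0 <= w x) ->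
  (sumL l (fun x => w x * u x * v x)) ^ 2
  <= sumL l (fun x => w x * u x ^ 2) * sumL l (fun x => w x * v x ^ 2).
Proof.
  induction l as [|a l IH]; intros Hw; [unfold sumL; simpl; lra|].
  rewrite !sumL_cons. specialize (IH ltac:(intros; apply Hw; simpl; auto)).
  set (S := sumL l (fun x => w x * u x * v x)) in *.
  set (P := sumL l (fun x => w x * u x ^ 2)) in *.
  set (Q := sumL l (fun x => w x * v x ^ 2)) in *.
  assert (HP : 0 <= P)
    by (apply sumL_nonneg; intros; apply Rmult_le_pos; [apply Hw; simpl; auto | apply pow2_ge_0]).
  assert (HQ : 0 <= Q)
    by (apply sumL_nonneg; intros; apply Rmult_le_pos; [apply Hw; simpl; auto | apply pow2_ge_0]).
  assert (Hwa : 0 <= w a) by (apply Hw; simpl; auto).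
  (* the cross term: 2 S u v <= P v^2 + Q u^2, by AM-GM and S^2 <= P Q *)
  assert (Hcross : 2 * S * (u a * v a) <= P * v a ^ 2 + Q * u a ^ 2).
  { assert (Hsq : (2 * S * (u a * v a)) ^ 2 <= (P * v a ^ 2 + Q * u a ^ 2) ^ 2).
    { assert (0 <= (P * v a ^ 2 - Q * u a ^ 2) ^ 2) by apply pow2_ge_0.
      assert (S ^ 2 * (u a * v a) ^ 2 <= P * Q * (u a * v a) ^ 2)
        by (apply Rmult_le_compat_r; [apply pow2_ge_0 | lra]).
      nra. }
    assert (0 <= P * v a ^ 2 + Q * u a ^ 2)
      by (pose proof (pow2_ge_0 (v a)); pose proof (pow2_ge_0 (u a)); nra).
    destruct (Rle_dec (2 * S * (u a * v a)) 0); [lra|].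
    apply Rsqr_incr_0_var; unfold Rsqr; [|auto]. simpl in Hsq. nra. }
  assert (w a * (2 * S * (u a * v a)) <= w a * (P * v a ^ 2 + Q * u a ^ 2))
    by (apply Rmult_le_compat_l; auto).
  nra.
Qed.

Lemma cauchy_schwarz {A} (l : list A) (w u v : A -> R) : (forall x, In x l -> 0 <= w x) ->
  (forall x, In x l -> 0 <= u x) -> (forall x, In x l -> 0 <= v x) ->
  sumL l (fun x => w x * u x * v x)
  <= sqrt (sumL l (fun x => w x * u x ^ 2)) * sqrt (sumL l (fun x => w x * v x ^ 2)).
Proof.
  intros Hw Hu Hv. rewrite <- sqrt_mult.
  - rewrite <- (sqrt_pow2 (sumL l (fun x => w x * u x * v x))).
    + apply sqrt_le_1_alt. apply cauchy_schwarz_sq; auto.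
    + apply sumL_nonneg; intros; repeat apply Rmult_le_pos; auto.
  - apply sumL_nonneg; intros; apply Rmult_le_pos; auto; apply pow2_ge_0.
  - apply sumL_nonneg; intros; apply Rmult_le_pos; auto; apply pow2_ge_0.
Qed.

Lemma sumN_sumL n g : sumN n g = sumL (seq 0 n) g.
Proof. reflexivity. Qed.

Lemma sumN_S n g : sumN (S n) g = sumN n g + g n.
Proof. rewrite !sumN_sumL, seq_S, sumL_app. simpl. rewrite sumL_cons, sumL_nil. lra. Qed.

Lemma sumN_Sl n g : sumN (S n) g = g 0%nat + sumN n (fun i => g (S i)).
Proof. rewrite !sumN_sumL. simpl. rewrite sumL_cons, <- seq_shift, sumL_map. reflexivity. Qed.

Lemma sumN_ext n g g' : (forall i, (i < n)%nat -> g i = g' i) -> sumN n g = sumN n g'.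
Proof. intros H. apply sumL_ext_in. intros x Hx. apply in_seq in Hx. apply H; lia. Qed.

Lemma sumN_plus n g g' : sumN n (fun x => g x + g' x) = sumN n g + sumN n g'.
Proof. apply sumL_plus. Qed.

Lemma sumN_minus n g g' : sumN n (fun x => g x - g' x) = sumN n g - sumN n g'.
Proof. apply sumL_minus. Qed.

Lemma sumN_scal n c g : sumN n (fun x => c * g x) = c * sumN n g.
Proof. apply sumL_scal. Qed.

Lemma sumN_zero n : sumN n (fun _ => 0) = 0.
Proof. apply sumL_zero. Qed.

Lemma sumN_le n g g' : (forall i, (i < n)%nat -> g i <= g' i) -> sumN n g <= sumN n g'.
Proof. intros H. apply sumL_le. intros x Hx. apply in_seq in Hx. apply H; lia. Qed.

Lemma sumN_abs n g : Rabs (sumN n g) <= sumN n (fun x => Rabs (g x)).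
Proof. apply sumL_abs. Qed.

Lemma sumN_nonneg n g : (forall i, (i < n)%nat -> 0 <= g i) -> 0 <= sumN n g.
Proof. intros H. apply sumL_nonneg. intros x Hx. apply in_seq in Hx. apply H; lia. Qed.

Lemma sumN_le_term n g i :
  (i < n)%nat -> (forall j, (j < n)%nat -> 0 <= g j) -> g i <= sumN n g.
Proof.
  induction n; intros Hi Hg; [lia|]. rewrite sumN_S.
  destruct (Nat.eq_dec i n) as [->|Hne].
  - pose proof (sumN_nonneg n g ltac:(intros; apply Hg; lia)). lra.
  - pose proof (IHn ltac:(lia) ltac:(intros; apply Hg; lia)). pose proof (Hg n ltac:(lia)). lra.
Qed.

Lemma sumN_telescope n (u : nat -> R) : u n - u 0%nat = sumN n (fun m => u (S m) - u m).
Proof. induction n; [unfold sumN; simpl; ring|]. rewrite sumN_S, <- IHn. ring. Qed.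

(** * Multi-indices and the multinomial theorem *)

Definition mi_eq_dec : forall a b : MI, {a = b} + {a <> b} := list_eq_dec Nat.eq_dec.

Lemma mi_S d n :
  mi (S d) n = flat_map (fun k => map (fun b => k :: b) (mi d (n - k))) (seq 0 (S n)).
Proof. reflexivity. Qed.

Lemma In_mi d n a : In a (mi d n) <-> length a = d /\ mi_abs a = n.
Proof.
  revert n a; induction d as [|d IH]; intros n a.
  - destruct n; simpl; split.
    + intros [<-|[]]; auto.
    + destruct a; simpl; [auto|]. intros [H _]; discriminate.
    + intros [].
    + destruct a; unfold mi_abs; simpl; intros [H1 H2]; discriminate.
  - rewrite mi_S. rewrite in_flat_map. split.
    + intros [k [Hk Ha]]. apply in_map_iff in Ha. destruct Ha as [b [<- Hb]].
      apply IH in Hb. apply in_seq in Hk. destruct Hb as [Hl Hs]. unfold mi_abs in *. simpl. lia.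
    + intros [Hl Hs]. destruct a as [|k b]; [discriminate|]. exists k.
      unfold mi_abs in Hs; simpl in Hs, Hl.
      split; [apply in_seq; lia|]. apply in_map. apply IH. unfold mi_abs. lia.
Qed.

Lemma NoDup_flat_map_disjoint {A B} (f : A -> list B) l :
  NoDup l -> (forall x, In x l -> NoDup (f x)) ->
  (forall x y b, In x l -> In y l -> In b (f x) -> In b (f y) -> x = y) ->
  NoDup (flat_map f l).
Proof.
  induction l as [|x l IH]; intros Hnd Hf Hdis; simpl; [constructor|].
  inversion Hnd; subst. apply NoDup_app.
  - apply Hf; simpl; auto.
  - apply IH; auto; [intros; apply Hf | intros; eapply Hdis]; simpl; eauto.
  - intros b Hb Hb'. apply in_flat_map in Hb'. destruct Hb' as [y [Hy Hby]].
    assert (x = y) by (eapply Hdis; simpl; eauto). subst. contradiction.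
Qed.

Lemma NoDup_mi d n : NoDup (mi d n).
Proof.
  revert n; induction d as [|d IH]; intros n.
  - destruct n; simpl; repeat constructor; auto.
  - rewrite mi_S. apply NoDup_flat_map_disjoint; [apply seq_NoDup | |].
    + intros k _. apply NoDup_map_NoDup_ForallPairs; auto.
      intros x y _ _ H. injection H; auto.
    + intros x y b _ _ Hx Hy. apply in_map_iff in Hx, Hy.
      destruct Hx as [? [<- _]]. destruct Hy as [? [H _]]. injection H; auto.
Qed.

Lemma In_mi_lt d q a : In a (mi_lt d q) <-> length a = d /\ (mi_abs a < q)%nat.
Proof.
  unfold mi_lt. rewrite in_flat_map. split.
  - intros [n [Hn Ha]]. apply In_mi in Ha. apply in_seq in Hn. lia.
  - intros [Hl Hs]. exists (mi_abs a). split; [apply in_seq; lia|]. apply In_mi; auto.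
Qed.

Lemma NoDup_mi_lt d q : NoDup (mi_lt d q).
Proof.
  unfold mi_lt. apply NoDup_flat_map_disjoint; [apply seq_NoDup | intros; apply NoDup_mi|].
  intros x y b _ _ Hx Hy. apply In_mi in Hx, Hy. lia.
Qed.

Lemma mi_zero d : mi d 0 = [repeat 0%nat d].
Proof. induction d; [reflexivity|]. rewrite mi_S. simpl. rewrite IHd. reflexivity. Qed.

Lemma mi_abs_repeat0 d : mi_abs (repeat 0%nat d) = 0%nat.
Proof. induction d; auto. Qed.

Lemma mi_abs0_repeat a : mi_abs a = 0%nat -> a = repeat 0%nat (length a).
Proof.
  induction a; simpl; auto. unfold mi_abs; simpl. intros H.
  f_equal; [lia|]. apply IHa. unfold mi_abs; lia.
Qed.

Lemma incr_length a i : length (incr a i) = length a.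
Proof. revert i; induction a; intros [|i]; simpl; auto. Qed.

Lemma incr_abs a i : (i < length a)%nat -> mi_abs (incr a i) = S (mi_abs a).
Proof.
  revert i; induction a; intros [|i] H; simpl in *; try lia; unfold mi_abs in *; simpl.
  rewrite IHa by lia. lia.
Qed.

Lemma mi_abs_S_incr a n : mi_abs a = S n ->
  exists i b, (i < length a)%nat /\ length b = length a /\ mi_abs b = n /\ a = incr b i.
Proof.
  revert n; induction a as [|e t IH]; intros n H; [discriminate|].
  unfold mi_abs in H; simpl in H. destruct e as [|e].
  - destruct (IH n H) as [i [b [Hi [Hl [Hs ->]]]]].
    exists (S i), (0%nat :: b). simpl. repeat split; auto; lia.
  - exists 0%nat, (e :: t). simpl. repeat split; unfold mi_abs in *; simpl in *; auto; lia.
Qed.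

Lemma monoAux_incr a i m x :
  (i < length a)%nat -> monoAux (incr a i) m x = x (m + i)%nat * monoAux a m x.
Proof.
  revert i m; induction a; intros [|i] m H; simpl in *; try lia.
  - rewrite Nat.add_0_r. ring.
  - rewrite IHa by lia. replace (S m + i)%nat with (m + S i)%nat by lia. ring.
Qed.

Lemma mono_incr a i x : (i < length a)%nat -> mono (incr a i) x = x i * mono a x.
Proof. apply monoAux_incr. Qed.

Lemma monoAux_repeat0 d m x : monoAux (repeat 0%nat d) m x = 1.
Proof. revert m; induction d; intros m; simpl; auto. rewrite IHd. ring. Qed.

Lemma monoAux_sq a i h : (monoAux a i h) ^ 2 = monoAux a i (fun c => h c ^ 2).
Proof.
  revert i; induction a; intros i; cbn [monoAux]; [ring|]. rewrite <- IHa.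
  replace ((h i ^ 2) ^ a) with ((h i ^ a) ^ 2) by (rewrite <- !pow_mult; f_equal; lia). ring.
Qed.

Lemma mi_fact_cons k b : mi_fact (k :: b) = (fact k * mi_fact b)%nat.
Proof. reflexivity. Qed.

Lemma mi_fact_neq0 a : INR (mi_fact a) <> 0.
Proof.
  apply not_0_INR. unfold mi_fact. induction a; simpl; [lia|].
  pose proof (fact_neq_0 a). lia.
Qed.

Lemma mi_fact_repeat0 d : mi_fact (repeat 0%nat d) = 1%nat.
Proof. induction d; simpl; auto. unfold mi_fact in *; simpl; rewrite IHd; reflexivity. Qed.

Lemma multinomial_coef_nonneg m a : 0 <= INR (fact m) / INR (mi_fact a).
Proof.
  apply Rmult_le_pos; [apply pos_INR|]. left; apply Rinv_0_lt_compat.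
  pose proof (mi_fact_neq0 a). pose proof (pos_INR (mi_fact a)). lra.
Qed.

(* Unlike [Binomial.C], [binom n k] vanishes for [k > n]. *)
Definition binom (n k : nat) : R :=
  if (k <=? n)%nat then INR (fact n) / (INR (fact k) * INR (fact (n - k))) else 0.

Lemma binom_0 n : binom n 0 = 1.
Proof. unfold binom. simpl. rewrite Nat.sub_0_r. field. apply INR_fact_neq_0. Qed.

Lemma binom_pascal m k : binom (S m) (S k) = binom m (S k) + binom m k.
Proof.
  unfold binom. destruct (Nat.leb_spec (S k) (S m)); destruct (Nat.leb_spec (S k) m);
    destruct (Nat.leb_spec k m); try lia.
  - pose proof (pascal m k ltac:(lia)) as P. unfold Binomial.C in P.
    simpl Nat.sub in P |- *. lra.
  - assert (k = m) by lia. subst. rewrite Nat.sub_diag. simpl Nat.sub. rewrite Nat.sub_diag.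
    field. repeat split; apply INR_fact_neq_0.
  - lra.
Qed.

Lemma binom_pascal_sum m (T : nat -> R) :
  sumN (S m) (fun k => binom m k * (T k + T (S k)))
  = sumN (S (S m)) (fun k => binom (S m) k * T k).
Proof.
  rewrite (sumN_ext _ _ (fun k => binom m k * T k + binom m k * T (S k))) by (intros; ring).
  rewrite sumN_plus.
  assert (Hlast : binom m (S m) = 0)
    by (unfold binom; destruct (Nat.leb_spec (S m) m); [lia | reflexivity]).
  replace (sumN (S m) (fun k => binom m k * T k))
    with (sumN (S (S m)) (fun k => binom m k * T k)) by (rewrite (sumN_S (S m)), Hlast; lra).
  rewrite (sumN_Sl (S m) (fun k => binom m k * T k)),
    (sumN_Sl (S m) (fun k => binom (S m) k * T k)), !binom_0.
  rewrite (sumN_ext (S m) (fun i => binom (S m) (S i) * T (S i))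
             (fun i => binom m (S i) * T (S i) + binom m i * T (S i)))
    by (intros; rewrite binom_pascal; ring).
  rewrite sumN_plus. ring.
Qed.

Lemma multinomial_coef_cons n k b : (k <= n)%nat ->
  INR (fact n) / INR (mi_fact (k :: b)) = binom n k * (INR (fact (n - k)) / INR (mi_fact b)).
Proof.
  intros H. unfold binom. destruct (Nat.leb_spec k n); [|lia]. rewrite mi_fact_cons, mult_INR.
  field. repeat split; try apply INR_fact_neq_0; apply mi_fact_neq0.
Qed.

(* Differentiating the m-th order multinomial sum once more gives the (m+1)-th one. *)
Lemma multinomial_step d : forall m (K : MI -> R),
  sumL (mi d m) (fun a => INR (fact m) / INR (mi_fact a) * sumN d (fun i => K (incr a i))) =
  sumL (mi d (S m)) (fun b => INR (fact (S m)) / INR (mi_fact b) * K b).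
Proof.
  induction d as [|d IH]; intros m K.
  - destruct m; simpl; unfold sumL; simpl; unfold sumN; simpl; lra.
  - set (T := fun k => sumL (mi d (S m - k))
                         (fun b => INR (fact (S m - k)) / INR (mi_fact b) * K (k :: b))).
    rewrite mi_S. rewrite sumL_flat_map, <- sumN_sumL.
    rewrite (sumN_ext _ _ (fun k => binom m k * (T k + T (S k)))).
    2:{ intros k Hk. rewrite sumL_map.
        rewrite (sumL_ext_in _ _ (fun b =>
                   binom m k * (INR (fact (m - k)) / INR (mi_fact b) *
                                sumN d (fun i => K (k :: incr b i)))
                 + binom m k * (INR (fact (m - k)) / INR (mi_fact b) * K (S k :: b)))).
        2:{ intros b _. rewrite sumN_Sl. simpl incr. rewrite multinomial_coef_cons by lia. ring. }
        rewrite sumL_plus, !sumL_scal, (IH (m - k)%nat (fun b => K (k :: b))).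
        unfold T. replace (S (m - k)) with (S m - k)%nat by lia. simpl (S m - S k)%nat. ring. }
    rewrite binom_pascal_sum. rewrite mi_S. rewrite sumL_flat_map, <- sumN_sumL.
    apply sumN_ext. intros k Hk. rewrite sumL_map. unfold T. rewrite <- sumL_scal.
    apply sumL_ext_in. intros b _. rewrite multinomial_coef_cons by lia. ring.
Qed.

Lemma multinomial d m (y : Pt) :
  sumL (mi d m) (fun a => INR (fact m) / INR (mi_fact a) * mono a y) = (sumN d y) ^ m.
Proof.
  induction m.
  - rewrite mi_zero, sumL_cons, sumL_nil. unfold mono.
    rewrite monoAux_repeat0, mi_fact_repeat0. simpl. field.
  - rewrite <- multinomial_step. simpl pow. rewrite <- IHm, <- sumL_scal. apply sumL_ext_in.
    intros a Ha. apply In_mi in Ha. destruct Ha as [Hl _].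
    rewrite (sumN_ext _ _ (fun i => mono a y * y i))
      by (intros; rewrite mono_incr by lia; ring).
    rewrite sumN_scal. ring.
Qed.

(** * Powers and one-variable calculus *)

Lemma rpow_pos x p : 0 < x -> rpow x p = Rpower x p.
Proof. intros H. unfold rpow. destruct (Req_EM_T x 0); [lra | auto]. Qed.

Lemma rpow_0_l p : p <> 0 -> rpow 0 p = 0.
Proof. intros H. unfold rpow. destruct (Req_EM_T 0 0); [|lra]. destruct (Req_EM_T p 0); [lra | auto]. Qed.

Lemma rpow_nonneg x p : 0 <= rpow x p.
Proof.
  unfold rpow. destruct (Req_EM_T x 0); [destruct (Req_EM_T p 0); lra|].
  unfold Rpower; left; apply exp_pos.
Qed.

Lemma Rpower_1_l x : Rpower 1 x = 1.
Proof. unfold Rpower. rewrite ln_1, Rmult_0_r, exp_0. reflexivity. Qed.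

Lemma Rpower_gt0 x p : 0 < Rpower x p.
Proof. apply exp_pos. Qed.

Lemma Rpower_le_nonpos_exp a b p : p <= 0 -> 0 < a <= b -> Rpower b p <= Rpower a p.
Proof.
  intros Hp Hab. replace p with (- (- p)) by ring. rewrite (Rpower_Ropp b), (Rpower_Ropp a).
  apply Rinv_le_contravar; [apply Rpower_gt0 | apply Rle_Rpower_l; lra].
Qed.

Definition ppow (t p : R) : R := if Rle_dec t 0 then 0 else Rpower t p.

Lemma ppow_pos t p : 0 < t -> ppow t p = Rpower t p.
Proof. intros H. unfold ppow. destruct (Rle_dec t 0); [lra | auto]. Qed.

Lemma ppow_nonneg t p : 0 <= ppow t p.
Proof. unfold ppow. destruct (Rle_dec t 0); [lra|]. left; apply Rpower_gt0. Qed.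

Lemma ppow_0_l p : ppow 0 p = 0.
Proof. unfold ppow. destruct (Rle_dec 0 0); lra. Qed.

Lemma rpow_mult t e p : 0 <= t -> 0 <= e -> p <> 0 -> rpow (t * e) p = ppow t p * rpow e p.
Proof.
  intros Ht He Hp. destruct (Req_dec t 0) as [->|Ht0].
  - rewrite Rmult_0_l, rpow_0_l, ppow_0_l by auto. ring.
  - destruct (Req_dec e 0) as [->|He0].
    + rewrite Rmult_0_r, rpow_0_l by auto. ring.
    + rewrite rpow_pos, rpow_pos, ppow_pos by (try apply Rmult_lt_0_compat; lra).
      rewrite Rpower_mult_distr; auto; lra.
Qed.

Lemma Rpower_small_near_0 p : 0 < p -> forall eps, 0 < eps -> exists del, 0 < del /\
  forall t, 0 < t < del -> Rpower t p < eps.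
Proof.
  intros Hp eps He. exists (Rpower eps (/ p)). split; [apply Rpower_gt0|].
  intros t [Ht1 Ht2]. replace eps with (Rpower (Rpower eps (/ p)) p).
  - apply Rlt_Rpower_l; auto.
  - rewrite Rpower_mult, Rinv_l by lra. apply Rpower_1; auto.
Qed.

Lemma derivable_pt_lim_ppow p x : 0 < x ->
  derivable_pt_lim (fun t => ppow t (p + 1)) x ((p + 1) * ppow x p).
Proof.
  intros Hx. rewrite ppow_pos by auto.
  apply (derivable_pt_lim_locally_ext (fun t => Rpower t (p + 1)) _ x 0 (x + 1)); [lra | |].
  - intros t Ht. rewrite ppow_pos by lra. reflexivity.
  - replace p with (p + 1 - 1) at 2 by ring. apply derivable_pt_lim_power; auto.
Qed.

Lemma continuity_pt_ppow p x : 0 < p -> continuity_pt (fun t => ppow t p) x.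
Proof.
  intros Hp. destruct (Rtotal_order x 0) as [Hx|[Hx|Hx]].
  - intros eps He. exists (- x). split; [lra|]. intros y [_ Hy]. simpl in *. unfold R_dist in *.
    apply Rabs_def2 in Hy. unfold ppow.
    destruct (Rle_dec y 0); destruct (Rle_dec x 0); try lra. rewrite Rminus_0_r, Rabs_R0; lra.
  - subst. intros eps He. destruct (Rpower_small_near_0 p Hp eps He) as [del [Hd Hs]].
    exists del. split; auto. intros y [_ Hy]. simpl in *. unfold R_dist in *.
    rewrite ppow_0_l, Rminus_0_r. rewrite Rminus_0_r in Hy. unfold ppow. destruct (Rle_dec y 0).
    + rewrite Rabs_R0; lra.
    + rewrite Rabs_pos_eq by (left; apply Rpower_gt0). apply Hs. apply Rabs_def2 in Hy. lra.
  - apply derivable_continuous_pt. exists (p * ppow x (p - 1)).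
    pose proof (derivable_pt_lim_ppow (p - 1) x Hx) as D.
    replace (p - 1 + 1) with p in D by ring. exact D.
Qed.

Lemma derivable_pt_lim_scal_l c f x l :
  derivable_pt_lim f x l -> derivable_pt_lim (fun t => c * f t) x (c * l).
Proof.
  intros H. replace (c * l) with (0 * f x + c * l) by ring.
  apply (derivable_pt_lim_mult (fun _ => c) f); auto. apply derivable_pt_lim_const.
Qed.

Lemma derivable_pt_lim_sumL {A} (l : list A) (g g' : A -> R -> R) x :
  (forall i, In i l -> derivable_pt_lim (g i) x (g' i x)) ->
  derivable_pt_lim (fun t => sumL l (fun i => g i t)) x (sumL l (fun i => g' i x)).
Proof.
  induction l as [|i l IH]; intros H; [apply derivable_pt_lim_const|].
  rewrite sumL_cons.
  apply (derivable_pt_lim_ext (fun t => g i t + sumL l (fun j => g j t))); [reflexivity|].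
  apply derivable_pt_lim_plus; [apply H; simpl; auto|]. apply IH. intros; apply H; simpl; auto.
Qed.

Lemma derivable_pt_lim_sumN n (g g' : nat -> R -> R) x :
  (forall i, (i < n)%nat -> derivable_pt_lim (g i) x (g' i x)) ->
  derivable_pt_lim (fun t => sumN n (fun i => g i t)) x (sumN n (fun i => g' i x)).
Proof. intros H. apply derivable_pt_lim_sumL. intros i Hi. apply in_seq in Hi. apply H. lia. Qed.

Lemma derivable_pt_lim_pow_shift (n : nat) (a x : R) :
  derivable_pt_lim (fun t => (t - a) ^ n) x (INR n * (x - a) ^ pred n).
Proof.
  replace (INR n * (x - a) ^ pred n) with (INR n * (x - a) ^ pred n * (1 - 0)) by ring.
  apply (derivable_pt_lim_comp (fun t => t - a) (fun y => y ^ n)).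
  - apply derivable_pt_lim_minus; [apply derivable_pt_lim_id | apply derivable_pt_lim_const].
  - apply derivable_pt_lim_pow.
Qed.

Lemma bound_of_deriv_bound_one_sided (u u' : R -> R) (b C : R) : 0 < b -> 0 <= C -> u 0 = 0 ->
  (forall t, 0 <= t <= 1 -> derivable_pt_lim u t (u' t)) ->
  (forall t, 0 <= t <= 1 -> u' t <= C * ppow t b) ->
  forall t, 0 <= t <= 1 -> u t <= C / (b + 1) * ppow t (b + 1).
Proof.
  intros Hb HC Hu0 Hd Hbd t Ht.
  destruct (Req_dec t 0) as [->|Ht0]; [rewrite Hu0, ppow_0_l; lra|].
  set (v := fun s => u s - C / (b + 1) * ppow s (b + 1)).
  destruct (MVT_gen v 0 t (fun s => u' s - C * ppow s b)) as [c [Hc Heq]].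
  - intros x Hx. rewrite Rmin_left, Rmax_right in Hx by lra.
    apply is_derive_Reals. unfold v. apply derivable_pt_lim_minus; [apply Hd; lra|].
    replace (C * ppow x b) with (C / (b + 1) * ((b + 1) * ppow x b)) by (field; lra).
    apply derivable_pt_lim_scal_l. apply derivable_pt_lim_ppow; lra.
  - intros x Hx. rewrite Rmin_left, Rmax_right in Hx by lra. unfold v.
    apply continuity_pt_minus.
    + apply derivable_continuous_pt. exists (u' x). apply Hd; lra.
    + apply continuity_pt_mult; [apply continuity_pt_const; intros ? ?; reflexivity|].
      apply continuity_pt_ppow. lra.
  - rewrite Rmin_left, Rmax_right in Hc by lra.
    assert (u' c - C * ppow c b <= 0) by (pose proof (Hbd c ltac:(lra)); lra).
    unfold v in Heq. rewrite Hu0, ppow_0_l in Heq.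
    assert ((u' c - C * ppow c b) * (t - 0) <= 0) by (apply Rmult_le_0_r; lra).
    lra.
Qed.

Lemma bound_of_deriv_bound (u u' : R -> R) (b C : R) : 0 < b -> 0 <= C -> u 0 = 0 ->
  (forall t, 0 <= t <= 1 -> derivable_pt_lim u t (u' t)) ->
  (forall t, 0 <= t <= 1 -> Rabs (u' t) <= C * ppow t b) ->
  forall t, 0 <= t <= 1 -> Rabs (u t) <= C / (b + 1) * ppow t (b + 1).
Proof.
  intros Hb HC Hu0 Hd Hbd t Ht. apply Rabs_le. split.
  - cut (- u t <= C / (b + 1) * ppow t (b + 1)); [lra|].
    apply (bound_of_deriv_bound_one_sided (fun s => - u s) (fun s => - u' s)); auto.
    + rewrite Hu0; ring.
    + intros s Hs. apply derivable_pt_lim_opp. auto.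
    + intros s Hs. pose proof (Hbd s Hs) as H. apply Rabs_le_between in H. lra.
  - apply (bound_of_deriv_bound_one_sided u u'); auto.
    intros s Hs. pose proof (Hbd s Hs) as H. apply Rabs_le_between in H. lra.
Qed.

Definition holder_prod (r : nat) (gam : R) : R :=
  fold_right Rmult 1 (map (fun i => gam + INR i) (seq 1 r)).

Lemma holder_prod_S r gam : holder_prod (S r) gam = holder_prod r gam * (gam + INR (S r)).
Proof.
  assert (Hinit : forall l a, fold_right Rmult a l = fold_right Rmult 1 l * a)
    by (induction l; simpl; intros; [ring | rewrite IHl; ring]).
  unfold holder_prod. rewrite seq_S, map_app, fold_right_app. simpl. rewrite Hinit.
  replace (1 + r)%nat with (S r) by lia. ring.
Qed.

Lemma holder_prod_pos r gam : 0 < gam -> 0 < holder_prod r gam.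
Proof.
  intros H. induction r; [unfold holder_prod; simpl; lra|]. rewrite holder_prod_S.
  apply Rmult_lt_0_compat; auto. pose proof (pos_INR (S r)). lra.
Qed.

Lemma semi_nonneg d r gam M : 0 < gam -> 0 <= semi d r gam M.
Proof.
  intros Hg. unfold semi. apply Rmult_le_pos; [|apply sqrt_pos].
  left. apply Rinv_0_lt_compat, (holder_prod_pos r gam Hg).
Qed.

Section TaylorOneVariable.
Variable Phi : nat -> R -> R.
Variable r : nat.

(* [taylor1 n j] is the Taylor polynomial of degree n of [Phi j] at 0, where [Phi (S j)]
   plays the role of the derivative of [Phi j]. *)
Definition taylor1 (n j : nat) (t : R) : R :=
  sumN (S n) (fun l => Phi (j + l) 0 * t ^ l / INR (fact l)).

Lemma taylor1_at_0 n j : taylor1 n j 0 = Phi j 0.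
Proof.
  unfold taylor1. rewrite sumN_Sl, (sumN_ext _ _ (fun _ => 0)), sumN_zero.
  - simpl. rewrite Nat.add_0_r. field.
  - intros i _. simpl pow. unfold Rdiv. ring.
Qed.

Lemma derivable_pt_lim_taylor1 n j t : derivable_pt_lim (taylor1 (S n) j) t (taylor1 n (S j) t).
Proof.
  unfold taylor1. apply (derivable_pt_lim_ext (fun t => Phi (j + 0) 0 +
     sumN (S n) (fun l => Phi (j + S l) 0 * t ^ S l / INR (fact (S l))))).
  { intros t0; rewrite (sumN_Sl (S n)). f_equal. simpl. field. }
  rewrite <- (Rplus_0_l (sumN _ _)).
  apply derivable_pt_lim_plus; [apply derivable_pt_lim_const|].
  apply (derivable_pt_lim_sumN (S n) (fun l t => Phi (j + S l) 0 * t ^ S l / INR (fact (S l)))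
     (fun l t => Phi (S j + l) 0 * t ^ l / INR (fact l))). intros l _.
  apply (derivable_pt_lim_ext (fun t => (Phi (j + S l) 0 / INR (fact (S l))) * (t - 0) ^ S l)).
  { intros; rewrite Rminus_0_r; field. apply INR_fact_neq_0. }
  replace (Phi (S j + l) 0 * t ^ l / INR (fact l))
    with (Phi (j + S l) 0 / INR (fact (S l)) * (INR (S l) * (t - 0) ^ pred (S l))).
  - apply derivable_pt_lim_scal_l, derivable_pt_lim_pow_shift.
  - simpl pred. rewrite Rminus_0_r. replace (S j + l)%nat with (j + S l)%nat by lia.
    rewrite fact_simpl, mult_INR. field. split; [apply INR_fact_neq_0 | apply not_0_INR; lia].
Qed.

Lemma taylor1_holder_remainder (C gam : R) : 0 <= C -> 0 < gam <= 1 ->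
  (forall m, (m < r)%nat -> forall t, 0 <= t <= 1 -> derivable_pt_lim (Phi m) t (Phi (S m) t)) ->
  (forall t, 0 <= t <= 1 -> Rabs (Phi r t - Phi r 0) <= C * ppow t gam) ->
  Rabs (Phi 0 1 - sumN (S r) (fun l => Phi l 0 / INR (fact l))) <= C / holder_prod r gam.
Proof.
  intros HC Hg HD HH.
  (* the remainder of [Phi (r - m)] is O(t^(gam + m)), by induction on m *)
  assert (Hm : forall m, (m <= r)%nat -> forall t, 0 <= t <= 1 ->
    Rabs (Phi (r - m) t - taylor1 m (r - m) t) <= C / holder_prod m gam * ppow t (gam + INR m)).
  { induction m; intros Hmr t Ht.
    - rewrite Nat.sub_0_r. unfold taylor1, holder_prod, sumN. simpl.
      rewrite Nat.add_0_r, !Rplus_0_r.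
      replace (Phi r t - Phi r 0 * 1 / 1) with (Phi r t - Phi r 0) by field.
      replace (C / 1) with C by field. apply HH; auto.
    - assert (Hj : (r - m)%nat = S (r - S m)) by lia.
      rewrite holder_prod_S, S_INR.
      replace (C / (holder_prod m gam * (gam + (INR m + 1))) * ppow t (gam + (INR m + 1)))
        with (C / holder_prod m gam / ((gam + INR m) + 1) * ppow t ((gam + INR m) + 1)).
      2:{ replace (gam + (INR m + 1)) with (gam + INR m + 1) by ring. field.
          pose proof (holder_prod_pos m gam ltac:(lra)). pose proof (pos_INR m). split; lra. }
      apply (bound_of_deriv_bound (fun t => Phi (r - S m) t - taylor1 (S m) (r - S m) t)
               (fun t => Phi (r - m) t - taylor1 m (r - m) t)); auto.
      + pose proof (pos_INR m); lra.
      + apply Rmult_le_pos; auto. left; apply Rinv_0_lt_compat, holder_prod_pos; lra.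
      + rewrite taylor1_at_0. ring.
      + intros s Hs. rewrite Hj. apply derivable_pt_lim_minus.
        * apply HD; [lia | auto].
        * apply derivable_pt_lim_taylor1.
      + intros s Hs. apply IHm; auto. lia. }
  pose proof (Hm r (le_n r) 1 ltac:(lra)) as H1.
  rewrite Nat.sub_diag, ppow_pos, Rpower_1_l, Rmult_1_r in H1 by lra.
  unfold taylor1 in H1. rewrite (sumN_ext _ _ (fun l => Phi l 0 / INR (fact l))) in H1; auto.
  intros i _. simpl. rewrite pow1. field. apply INR_fact_neq_0.
Qed.
End TaylorOneVariable.

(** * Euclidean distance and continuity *)

Definition enorm (d : nat) (h : Pt) : R := sqrt (sumN d (fun c => h c ^ 2)).

Lemma edist_nonneg d x y : 0 <= edist d x y.
Proof. apply sqrt_pos. Qed.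

Lemma Rabs_coord_le_edist d x y i : (i < d)%nat -> Rabs (x i - y i) <= edist d x y.
Proof.
  intros Hi. unfold edist. rewrite <- sqrt_Rsqr_abs. apply sqrt_le_1_alt.
  rewrite Rsqr_pow2. apply (sumN_le_term d (fun c => (x c - y c) ^ 2) i); auto.
  intros; apply pow2_ge_0.
Qed.

Lemma edist_le_scal_enorm d x y h s : 0 <= s ->
  (forall c, (c < d)%nat -> Rabs (y c - x c) <= s * Rabs (h c)) -> edist d y x <= s * enorm d h.
Proof.
  intros Hs H. unfold edist, enorm. rewrite <- (sqrt_pow2 s) by auto.
  rewrite <- sqrt_mult by (try apply pow2_ge_0; apply sumN_nonneg; intros; apply pow2_ge_0).
  apply sqrt_le_1_alt. rewrite <- sumN_scal. apply sumN_le. intros c Hc.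
  pose proof (H c Hc). pose proof (Rabs_pos (y c - x c)).
  rewrite <- (pow2_abs (y c - x c)), <- (pow2_abs (h c)).
  replace (s ^ 2 * Rabs (h c) ^ 2) with ((s * Rabs (h c)) ^ 2) by ring.
  apply pow_incr. lra.
Qed.

Lemma pt_eq_of_edist0 d x y : edist d x y = 0 -> pt_eq d x y.
Proof.
  intros H i Hi. pose proof (Rabs_coord_le_edist d x y i Hi). pose proof (Rabs_pos (x i - y i)).
  destruct (Req_dec (x i - y i) 0); [lra|].
  pose proof (Rabs_pos_lt _ H2). lra.
Qed.

Lemma edist0_of_pt_eq d x y : pt_eq d x y -> edist d x y = 0.
Proof.
  intros H. unfold edist. rewrite (sumN_ext _ _ (fun _ => 0)), sumN_zero; [apply sqrt_0|].
  intros i Hi. rewrite H; auto. ring.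
Qed.

Lemma edist_pos_of_not_pt_eq d x y : ~ pt_eq d x y -> 0 < edist d x y.
Proof.
  intros H. destruct (edist_nonneg d x y) as [|E]; auto.
  exfalso. apply H, pt_eq_of_edist0. auto.
Qed.

Lemma ContOn_eq_of_edist0 d Om g x y :
  ContOn d Om g -> Om x -> Om y -> edist d y x = 0 -> g y = g x.
Proof.
  intros Hc Hx Hy He. destruct (Req_dec (g y) (g x)) as [E|E]; auto.
  assert (Hp : 0 < Rabs (g y - g x)) by (apply Rabs_pos_lt; lra).
  destruct (Hc x Hx _ Hp) as [del [Hd Hdel]]. specialize (Hdel y Hy ltac:(lra)). lra.
Qed.

Lemma ContOn_const d Om c : ContOn d Om (fun _ => c).
Proof. intros x _ eps He. exists 1. split; [lra|]. intros. rewrite Rminus_diag, Rabs_R0; lra. Qed.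

Lemma ContOn_coord d Om i a : (i < d)%nat -> ContOn d Om (fun x => x i - a).
Proof.
  intros Hi x _ eps He. exists eps. split; auto. intros y _ Hy.
  replace (y i - a - (x i - a)) with (y i - x i) by ring.
  eapply Rle_lt_trans; [apply Rabs_coord_le_edist; eauto | auto].
Qed.

Lemma ContOn_plus d Om g h : ContOn d Om g -> ContOn d Om h -> ContOn d Om (fun x => g x + h x).
Proof.
  intros Hg Hh x Hx eps He. destruct (Hg x Hx (eps/2) ltac:(lra)) as [d1 [Hd1 H1]].
  destruct (Hh x Hx (eps/2) ltac:(lra)) as [d2 [Hd2 H2]].
  exists (Rmin d1 d2). split; [apply Rmin_pos; auto|]. intros y Hy Hyx.
  specialize (H1 y Hy ltac:(pose proof (Rmin_l d1 d2); lra)).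
  specialize (H2 y Hy ltac:(pose proof (Rmin_r d1 d2); lra)).
  replace (g y + h y - (g x + h x)) with ((g y - g x) + (h y - h x)) by ring.
  eapply Rle_lt_trans; [apply Rabs_triang|]. lra.
Qed.

Lemma ContOn_mult d Om g h : ContOn d Om g -> ContOn d Om h -> ContOn d Om (fun x => g x * h x).
Proof.
  intros Hg Hh x Hx eps He.
  set (A := Rabs (g x) + 1). set (B := Rabs (h x) + 1).
  assert (HA : 0 < A) by (unfold A; pose proof (Rabs_pos (g x)); lra).
  assert (HB : 0 < B) by (unfold B; pose proof (Rabs_pos (h x)); lra).
  destruct (Hg x Hx (eps / (2 * B))) as [d1 [Hd1 H1]]; [apply Rdiv_lt_0_compat; lra|].
  destruct (Hh x Hx (Rmin 1 (eps / (2 * A)))) as [d2 [Hd2 H2]].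
  { apply Rmin_pos; [lra|]. apply Rdiv_lt_0_compat; lra. }
  exists (Rmin d1 d2). split; [apply Rmin_pos; auto|]. intros y Hy Hyx.
  specialize (H1 y Hy ltac:(pose proof (Rmin_l d1 d2); lra)).
  specialize (H2 y Hy ltac:(pose proof (Rmin_r d1 d2); lra)).
  pose proof (Rmin_l 1 (eps / (2 * A))). pose proof (Rmin_r 1 (eps / (2 * A))).
  assert (Hhy : Rabs (h y) <= B).
  { unfold B. replace (h y) with (h x + (h y - h x)) by ring.
    eapply Rle_trans; [apply Rabs_triang|]. lra. }
  assert (E1 : Rabs (g y - g x) * Rabs (h y) < eps / 2).
  { apply Rle_lt_trans with (Rabs (g y - g x) * B);
      [apply Rmult_le_compat_l; [apply Rabs_pos | auto]|].
    apply (Rmult_lt_compat_r B) in H1; auto. replace (eps / (2 * B) * B) with (eps / 2) in H1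
      by (field; lra). auto. }
  assert (E2 : Rabs (g x) * Rabs (h y - h x) < eps / 2).
  { apply Rle_lt_trans with (A * Rabs (h y - h x));
      [apply Rmult_le_compat_r; [apply Rabs_pos | unfold A; lra]|].
    replace (eps / 2) with (A * (eps / (2 * A))) by (field; lra).
    apply Rmult_lt_compat_l; lra. }
  replace (g y * h y - g x * h x) with ((g y - g x) * h y + g x * (h y - h x)) by ring.
  eapply Rle_lt_trans; [apply Rabs_triang|]. rewrite !Rabs_mult. lra.
Qed.

Lemma ContOn_pow d Om g n : ContOn d Om g -> ContOn d Om (fun x => g x ^ n).
Proof. intros H. induction n; simpl; [apply ContOn_const | apply ContOn_mult; auto]. Qed.

Lemma ContOn_sumL {A} d Om (l : list A) (g : A -> Pt -> R) :
  (forall i, In i l -> ContOn d Om (g i)) -> ContOn d Om (fun x => sumL l (fun i => g i x)).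
Proof.
  induction l; intros H; [exact (ContOn_const d Om 0)|].
  apply (ContOn_plus d Om (g a) (fun x => sumL l (fun i => g i x))); [apply H; simpl; auto|].
  apply IHl. intros; apply H; simpl; auto.
Qed.

(** * The chain rule along a line *)

Lemma common_radius n (P : nat -> R -> Prop) :
  (forall i del del', P i del -> 0 < del' <= del -> P i del') ->
  (forall i, (i < n)%nat -> exists del, 0 < del /\ P i del) ->
  exists del, 0 < del /\ forall i, (i < n)%nat -> P i del.
Proof.
  intros Hmono H. induction n.
  - exists 1. split; [lra|]. intros; lia.
  - destruct IHn as [d1 [Hd1 H1]]; [intros; apply H; lia|].
    destruct (H n ltac:(lia)) as [d2 [Hd2 H2]].
    exists (Rmin d1 d2). split; [apply Rmin_pos; auto|]. intros i Hi.
    destruct (Nat.eq_dec i n) as [->|Hne].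
    + apply (Hmono n d2); auto. split; [apply Rmin_pos; auto | apply Rmin_r].
    + apply (Hmono i d1); [apply H1; lia|]. split; [apply Rmin_pos; auto | apply Rmin_l].
Qed.

Lemma upd_same x j t : upd x j t j = t.
Proof. unfold upd. rewrite Nat.eqb_refl. reflexivity. Qed.

Lemma upd_other x j t c : c <> j -> upd x j t c = x c.
Proof. intros H. unfold upd. destruct (Nat.eqb_spec c j); [lia | reflexivity]. Qed.

Lemma upd_upd x j t t' : upd (upd x j t) j t' = upd x j t'.
Proof. apply functional_extensionality. intros c. unfold upd. destruct (Nat.eqb c j); auto. Qed.

Lemma upd_id x j : upd x j (x j) = x.
Proof. apply functional_extensionality. intros c. unfold upd. destruct (Nat.eqb_spec c j); congruence. Qed.

Lemma Rabs_sub_le_of_between a del tau :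
  Rmin a (a + del) <= tau <= Rmax a (a + del) -> Rabs (tau - a) <= Rabs del.
Proof.
  unfold Rmin, Rmax. intros Htau. apply Rabs_le.
  pose proof (Rle_abs del). pose proof (Rle_abs (- del)). rewrite Rabs_Ropp in *.
  destruct (Rle_dec a (a + del)); lra.
Qed.

Lemma coord_increment_estimate (g g' : Pt -> R) (y : Pt) m del L eps :
  (forall tau, Rmin (y m) (y m + del) <= tau <= Rmax (y m) (y m + del) ->
     derivable_pt_lim (fun t => g (upd y m t)) tau (g' (upd y m tau)) /\
     Rabs (g' (upd y m tau) - L) <= eps) ->
  Rabs (g (upd y m (y m + del)) - g y - L * del) <= eps * Rabs del.
Proof.
  intros H.
  destruct (MVT_gen (fun t => g (upd y m t)) (y m) (y m + del) (fun t => g' (upd y m t)))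
    as [xi [Hxi Heq]].
  - intros x Hx. apply is_derive_Reals, H. lra.
  - intros x Hx. apply derivable_continuous_pt. eexists. apply H. auto.
  - simpl in Heq. rewrite upd_id in Heq. rewrite Heq.
    replace (g' (upd y m xi) * (y m + del - y m) - L * del)
      with ((g' (upd y m xi) - L) * del) by ring.
    rewrite Rabs_mult. apply Rmult_le_compat_r; [apply Rabs_pos|]. apply H; auto.
Qed.

Section ChainRule.
Variables (d : nat) (Om : Pt -> Prop) (r : nat) (f : Pt -> R) (F : MI -> Pt -> R).
Hypothesis HF : DerivFamily d Om r f F.
Hypothesis HOm : IsOpen d Om.

Lemma increment_estimate_in_box (a : MI) (x0 h : Pt) (s eps' : R) :
  length a = d -> (mi_abs a < r)%nat ->
  (forall y, (forall c, (c < d)%nat -> Rabs (y c - x0 c) <= Rabs s * Rabs (h c)) ->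
     Om y /\ forall i, (i < d)%nat -> Rabs (F (incr a i) y - F (incr a i) x0) <= eps') ->
  Rabs (F a (fun c => x0 c + s * h c) - F a x0 - s * sumN d (fun i => F (incr a i) x0 * h i))
  <= eps' * (Rabs s * sumN d (fun i => Rabs (h i))).
Proof.
  intros Hl Ha Hbox. destruct HF as [_ [HFc HFd]].
  assert (Hsh : forall c, Rabs (x0 c + s * h c - x0 c) <= Rabs s * Rabs (h c))
    by (intros c; replace (x0 c + s * h c - x0 c) with (s * h c) by ring; rewrite Rabs_mult; lra).
  (* move from x0 to x0 + s h one coordinate at a time: [P m] has moved the first m *)
  set (P := fun (m c : nat) => if (c <? m)%nat then x0 c + s * h c else x0 c).
  assert (HP : forall m c, (c < d)%nat -> Rabs (P m c - x0 c) <= Rabs s * Rabs (h c)).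
  { intros m c _. unfold P. destruct (c <? m)%nat; auto.
    rewrite Rminus_diag, Rabs_R0. apply Rmult_le_pos; apply Rabs_pos. }
  assert (Hterm : forall m, (m < d)%nat ->
     Rabs (F a (P (S m)) - F a (P m) - F (incr a m) x0 * (s * h m)) <= eps' * Rabs (s * h m)).
  { intros m Hm.
    assert (EPm : P m m = x0 m) by (unfold P; rewrite Nat.ltb_irrefl; reflexivity).
    assert (EPSm : upd (P m) m (x0 m + s * h m) = P (S m)).
    { apply functional_extensionality; intros c. unfold upd, P. destruct (Nat.eqb_spec c m).
      - subst. destruct (Nat.ltb_spec m (S m)); [reflexivity | lia].
      - destruct (Nat.ltb_spec c m); destruct (Nat.ltb_spec c (S m)); auto; lia. }
    rewrite <- EPSm, <- EPm. apply (coord_increment_estimate (F a) (F (incr a m))).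
    rewrite EPm. intros tau Htau.
    destruct (Hbox (upd (P m) m tau)) as [Hom Hpartial].
    { intros c Hcd. unfold upd. destruct (Nat.eqb_spec c m).
      - subst. rewrite <- Rabs_mult. apply Rabs_sub_le_of_between; auto.
      - apply HP; auto. }
    split; [|apply Hpartial; auto].
    pose proof (HFd a m (upd (P m) m tau) Hl Ha Hm Hom) as D.
    rewrite upd_same in D. eapply derivable_pt_lim_ext; [|exact D].
    intros t. simpl. rewrite upd_upd. reflexivity. }
  (* [P d] and x0 + s h agree on the first d coordinates *)
  assert (Eend : F a (fun c => x0 c + s * h c) = F a (P d)).
  { apply (ContOn_eq_of_edist0 d Om); [apply HFc; auto; lia | | |].
    - apply Hbox. intros c Hcd. unfold P. destruct (Nat.ltb_spec c d); [apply Hsh | lia].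
    - apply Hbox. intros c _. apply Hsh.
    - apply edist0_of_pt_eq. intros c Hcd. unfold P. destruct (Nat.ltb_spec c d); [reflexivity | lia]. }
  assert (E0 : P 0%nat = x0) by (apply functional_extensionality; intros c; unfold P; reflexivity).
  rewrite Eend. replace (F a x0) with (F a (P 0%nat)) by (rewrite E0; reflexivity).
  rewrite (sumN_telescope d (fun m => F a (P m))), <- sumN_scal, <- sumN_minus.
  eapply Rle_trans; [apply sumN_abs|].
  rewrite <- !sumN_scal. apply sumN_le. intros m Hm.
  rewrite <- Rabs_mult.
  replace (s * (F (incr a m) x0 * h m)) with (F (incr a m) x0 * (s * h m)) by ring.
  apply Hterm; auto.
Qed.

Lemma derivable_pt_lim_along_line (a : MI) (p h : Pt) (t0 : R) :
  length a = d -> (mi_abs a < r)%nat -> Om (fun c => p c + t0 * h c) ->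
  derivable_pt_lim (fun t => F a (fun c => p c + t * h c)) t0
    (sumN d (fun i => F (incr a i) (fun c => p c + t0 * h c) * h i)).
Proof.
  intros Hl Ha Hin. pose proof (proj1 (proj2 HF)) as HFc.
  set (x0 := fun c => p c + t0 * h c). fold x0 in Hin |- *.
  intros eps He.
  destruct (HOm x0 Hin) as [rho [Hrho Hball]].
  set (H1 := sumN d (fun i => Rabs (h i))).
  assert (HH1 : 0 <= H1) by (apply sumN_nonneg; intros; apply Rabs_pos).
  set (eps' := eps / (H1 + 1)).
  assert (He' : 0 < eps') by (unfold eps'; apply Rdiv_lt_0_compat; lra).
  destruct (common_radius d (fun i del => forall y, Om y -> edist d y x0 < del ->
      Rabs (F (incr a i) y - F (incr a i) x0) < eps')) as [dc [Hdc Hc]].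
  { intros i del del' Hp Hd y Hy Hyd. apply Hp; auto. lra. }
  { intros i Hi. apply (HFc (incr a i)); auto.
    - rewrite incr_length; auto.
    - rewrite incr_abs by lia. lia. }
  set (R0 := Rmin rho dc). set (Nh := enorm d h + 1).
  assert (HR0 : 0 < R0) by (apply Rmin_pos; auto).
  assert (HNh : 0 < Nh) by (unfold Nh, enorm; pose proof (sqrt_pos (sumN d (fun c => h c ^ 2))); lra).
  exists (mkposreal (R0 / Nh) ltac:(apply Rdiv_lt_0_compat; auto)). intros s Hs0 Hs. simpl in Hs.
  assert (Hsmall : Rabs s * enorm d h < R0).
  { apply Rle_lt_trans with (Rabs s * Nh).
    - apply Rmult_le_compat_l; [apply Rabs_pos | unfold Nh; lra].
    - apply (Rmult_lt_compat_r Nh) in Hs; auto. unfold Rdiv in Hs.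
      rewrite Rmult_assoc, Rinv_l, Rmult_1_r in Hs by lra. lra. }
  pose proof (increment_estimate_in_box a x0 h s eps' Hl Ha) as Hinc.
  replace (fun c => p c + (t0 + s) * h c) with (fun c => x0 c + s * h c)
    by (apply functional_extensionality; intros c; unfold x0; ring).
  fold x0. assert (Hsp : 0 < Rabs s) by (apply Rabs_pos_lt; auto).
  replace ((F a (fun c => x0 c + s * h c) - F a x0) / s - sumN d (fun i => F (incr a i) x0 * h i))
    with ((F a (fun c => x0 c + s * h c) - F a x0 - s * sumN d (fun i => F (incr a i) x0 * h i)) / s)
    by (field; auto).
  unfold Rdiv. rewrite Rabs_mult, Rabs_inv.
  apply Rle_lt_trans with (eps' * (Rabs s * H1) * / Rabs s).
  - apply Rmult_le_compat_r; [left; apply Rinv_0_lt_compat; auto|].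
    apply Hinc. intros y Hy.
    assert (Hyx : edist d y x0 < R0)
      by (eapply Rle_lt_trans; [apply edist_le_scal_enorm; auto; apply Rabs_pos | exact Hsmall]).
    assert (Om y) by (apply Hball; pose proof (Rmin_l rho dc); unfold R0 in Hyx; lra).
    split; auto. intros i Hi. left. apply Hc; auto. pose proof (Rmin_r rho dc). unfold R0 in Hyx. lra.
  - replace (eps' * (Rabs s * H1) * / Rabs s) with (eps' * H1) by (field; lra).
    unfold eps'. apply Rmult_lt_reg_r with (H1 + 1); [lra|].
    replace (eps / (H1 + 1) * H1 * (H1 + 1)) with (eps * H1) by (field; lra). nra.
Qed.
End ChainRule.

(** * Taylor's theorem with Hoelder remainder *)

Definition taylor_poly (d r : nat) (F : MI -> Pt -> R) (z x : Pt) : R :=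
  sumL (mi_lt d (S r)) (fun b => F b z / INR (mi_fact b) * mono b (fun c => x c - z c)).

(* [line_deriv d F z h m t] is the m-th derivative of t |-> f (z + t h), by the multinomial
   expansion of (h . nabla)^m. *)
Definition line_deriv (d : nat) (F : MI -> Pt -> R) (z h : Pt) (m : nat) (t : R) : R :=
  sumL (mi d m) (fun a => INR (fact m) / INR (mi_fact a) * F a (fun c => z c + t * h c) * mono a h).

Lemma derivable_pt_lim_line_deriv d Om r f F (z h : Pt) m t :
  DerivFamily d Om r f F -> IsOpen d Om -> (m < r)%nat -> Om (fun c => z c + t * h c) ->
  derivable_pt_lim (line_deriv d F z h m) t (line_deriv d F z h (S m) t).
Proof.
  intros HF HOm Hm Hin. unfold line_deriv.
  set (pt := fun t c => z c + t * h c). fold (pt t) in Hin |- *.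
  set (coef := fun a => INR (fact m) / INR (mi_fact a)).
  assert (Hd : derivable_pt_lim (fun t => sumL (mi d m) (fun a => coef a * mono a h * F a (pt t))) t
    (sumL (mi d m) (fun a => coef a * mono a h * sumN d (fun i => F (incr a i) (pt t) * h i)))).
  { apply (derivable_pt_lim_sumL (mi d m) (fun a t => coef a * mono a h * F a (pt t))
             (fun a t => coef a * mono a h * sumN d (fun i => F (incr a i) (pt t) * h i))).
    intros a Ha. apply In_mi in Ha. destruct Ha as [Hl Hs].
    apply derivable_pt_lim_scal_l. apply (derivable_pt_lim_along_line d Om r f F); auto; lia. }
  eapply derivable_pt_lim_ext; [|replace (sumL (mi d (S m)) _) with
      (sumL (mi d m) (fun a => coef a * mono a h * sumN d (fun i => F (incr a i) (pt t) * h i)));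
      [exact Hd|]].
  - intros s. apply sumL_ext_in. intros a _. unfold coef, pt. ring.
  - rewrite (sumL_ext_in (mi d (S m)) _
               (fun b => INR (fact (S m)) / INR (mi_fact b) * (F b (pt t) * mono b h)))
      by (intros; ring).
    rewrite <- multinomial_step. apply sumL_ext_in. intros a Ha.
    apply In_mi in Ha. destruct Ha as [Hl _].
    unfold coef. rewrite Rmult_assoc, <- !sumN_scal. apply sumN_ext. intros i Hi.
    rewrite mono_incr by lia. ring.
Qed.

(* Cauchy-Schwarz against the multinomial theorem for sum_i (h_i)^2. *)
Lemma multinomial_weighted_le d r (M : MI -> R) (h : Pt) :
  (forall a, In a (mi d r) -> 0 <= M a) ->
  sumL (mi d r) (fun a => INR (fact r) / INR (mi_fact a) * M a * Rabs (mono a h))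
  <= sqrt (sumL (mi d r) (fun a => INR (fact r) / INR (mi_fact a) * M a ^ 2)) * enorm d h ^ r.
Proof.
  intros HM0.
  eapply Rle_trans; [apply (cauchy_schwarz (mi d r) (fun a => INR (fact r) / INR (mi_fact a)) M
                              (fun a => Rabs (mono a h)))|].
  - intros; apply multinomial_coef_nonneg.
  - auto.
  - intros; apply Rabs_pos.
  - apply Rmult_le_compat_l; [apply sqrt_pos|]. right.
    rewrite (sumL_ext_in _ _ (fun a => INR (fact r) / INR (mi_fact a) * mono a (fun c => h c ^ 2))).
    2:{ intros a _. rewrite <- Rsqr_pow2, <- Rsqr_abs, Rsqr_pow2. unfold mono. rewrite monoAux_sq. reflexivity. }
    rewrite multinomial. unfold enorm.
    set (Q := sumN d (fun c => h c ^ 2)).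
    assert (HQ : 0 <= Q) by (apply sumN_nonneg; intros; apply pow2_ge_0).
    rewrite <- (sqrt_sqrt Q HQ) at 1. rewrite Rpow_mult_distr.
    replace (sqrt Q ^ r * sqrt Q ^ r) with ((sqrt Q ^ r) ^ 2) by ring.
    apply sqrt_pow2. apply pow_le, sqrt_pos.
Qed.

Section TaylorRemainder.
Variables (d : nat) (Om : Pt -> Prop) (r : nat) (f : Pt -> R) (F : MI -> Pt -> R).
Variables (M : MI -> R) (gam : R) (z x : Pt).
Hypothesis HF : DerivFamily d Om r f F.
Hypothesis HOm : IsOpen d Om.
Hypothesis Hgam : 0 < gam <= 1.
Hypothesis HM0 : forall a, In a (mi d r) -> 0 <= M a.
Hypothesis HHol : forall a, In a (mi d r) -> forall y y', Om y -> Om y' ->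
   Rabs (F a y - F a y') <= M a * rpow (edist d y y') gam.
Hypothesis Hseg : forall t, 0 <= t <= 1 -> Om (fun m => z m + t * (x m - z m)).

Let h : Pt := fun c => x c - z c.
Let SS : R := sumL (mi d r) (fun a => INR (fact r) / INR (mi_fact a) * M a ^ 2).

Lemma edist_on_segment t : 0 <= t ->
  edist d (fun c => z c + t * h c) (fun c => z c + 0 * h c) = t * edist d x z.
Proof.
  intros Ht. unfold edist.
  rewrite (sumN_ext _ _ (fun c => t ^ 2 * h c ^ 2)) by (intros; ring).
  rewrite sumN_scal, sqrt_mult, sqrt_pow2 by (auto; try apply pow2_ge_0;
    apply sumN_nonneg; intros; apply pow2_ge_0).
  reflexivity.
Qed.

Lemma line_deriv_holder t : 0 <= t <= 1 ->
  Rabs (line_deriv d F z h r t - line_deriv d F z h r 0)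
  <= sqrt SS * edist d x z ^ r * rpow (edist d x z) gam * ppow t gam.
Proof.
  intros Ht. unfold line_deriv. rewrite <- sumL_minus.
  eapply Rle_trans; [apply sumL_abs|].
  apply Rle_trans with (sumL (mi d r) (fun a => INR (fact r) / INR (mi_fact a) * M a * Rabs (mono a h))
                        * (ppow t gam * rpow (edist d x z) gam)).
  - rewrite Rmult_comm, <- sumL_scal. apply sumL_le. intros a Ha.
    pose proof (multinomial_coef_nonneg r a) as Hc.
    rewrite <- Rmult_minus_distr_r, <- Rmult_minus_distr_l, !Rabs_mult, (Rabs_pos_eq _ Hc).
    pose proof (HHol a Ha _ _ (Hseg t Ht) (Hseg 0 ltac:(lra))) as Hb.
    fold h in Hb. rewrite edist_on_segment, rpow_mult in Hb by (try apply edist_nonneg; lra).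
    pose proof (Rabs_pos (mono a h)).
    apply Rle_trans with (INR (fact r) / INR (mi_fact a) *
                          (M a * (ppow t gam * rpow (edist d x z) gam)) * Rabs (mono a h)).
    + apply Rmult_le_compat_r; auto. apply Rmult_le_compat_l; auto.
    + right; ring.
  - pose proof (ppow_nonneg t gam). pose proof (rpow_nonneg (edist d x z) gam).
    apply Rle_trans with (sqrt SS * enorm d h ^ r * (ppow t gam * rpow (edist d x z) gam)).
    + apply Rmult_le_compat_r; [apply Rmult_le_pos; auto|]. apply multinomial_weighted_le; auto.
    + right. unfold enorm, h. fold (edist d x z). ring.
Qed.

Lemma taylor_remainder_bound :
  Rabs (f x - taylor_poly d r F z x) <= semi d r gam M * edist d x z ^ r * rpow (edist d x z) gam.
Proof.
  set (C := sqrt SS * edist d x z ^ r * rpow (edist d x z) gam).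
  assert (HC : 0 <= C).
  { apply Rmult_le_pos; [apply Rmult_le_pos; [apply sqrt_pos | apply pow_le, edist_nonneg] |].
    apply rpow_nonneg. }
  pose proof (taylor1_holder_remainder (line_deriv d F z h) r C gam HC Hgam) as IB.
  assert (Hpt1 : (fun c => z c + 1 * h c) = x)
    by (apply functional_extensionality; intros c; unfold h; ring).
  assert (Hpt0 : (fun c => z c + 0 * h c) = z)
    by (apply functional_extensionality; intros c; ring).
  assert (E0 : line_deriv d F z h 0 1 = f x).
  { unfold line_deriv. rewrite mi_zero, sumL_cons, sumL_nil, Hpt1. unfold mono.
    rewrite monoAux_repeat0, mi_fact_repeat0. destruct HF as [HF0 _].
    rewrite HF0 by (rewrite <- Hpt1; apply Hseg; lra). simpl. field. }
  assert (E1 : sumN (S r) (fun l => line_deriv d F z h l 0 / INR (fact l)) = taylor_poly d r F z x).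
  { unfold taylor_poly, mi_lt. rewrite sumL_flat_map. apply sumL_ext_in. intros l _.
    unfold line_deriv. rewrite Hpt0. unfold Rdiv at 1. rewrite Rmult_comm, <- sumL_scal.
    apply sumL_ext_in. intros a _. fold h. field.
    split; [apply mi_fact_neq0 | apply INR_fact_neq_0]. }
  rewrite <- E0, <- E1. eapply Rle_trans; [apply IB|].
  - intros m Hm t Ht. apply (derivable_pt_lim_line_deriv d Om r f); auto.
  - intros t Ht. exact (line_deriv_holder t Ht).
  - right. unfold C, semi, SS, holder_prod. field.
    pose proof (holder_prod_pos r gam ltac:(lra)). unfold holder_prod in *. lra.
Qed.
End TaylorRemainder.

(** * Exactness on the Taylor polynomial *)

(* The coefficient of the u-th derivative of t^e (zero when u > e). *)
Definition ffact (e u : nat) : R := if (u <=? e)%nat then INR (fact e) / INR (fact (e - u)) else 0.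

Lemma ffact_0 n : ffact n 0 = 1.
Proof. unfold ffact. simpl. rewrite Nat.sub_0_r. field. apply INR_fact_neq_0. Qed.

Lemma ffact_step e u y :
  ffact e u * (INR (e - u) * y ^ pred (e - u)) = ffact e (S u) * y ^ (e - S u).
Proof.
  unfold ffact. destruct (Nat.leb_spec u e); destruct (Nat.leb_spec (S u) e); try lia.
  - replace (e - u)%nat with (S (e - S u)) by lia. simpl pred. rewrite fact_simpl, mult_INR.
    field. split; [apply INR_fact_neq_0 | apply not_0_INR; lia].
  - replace (e - u)%nat with 0%nat by lia. simpl. ring.
  - ring.
Qed.

(* [dmono z b a i x] is the a-th partial derivative of x |-> (x - z)^b, where the
   multi-indices a and b act on the coordinates i, i+1, ... *)
Fixpoint dmono (z : Pt) (b a : MI) (i : nat) (x : Pt) : R :=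
  match b, a with
  | e :: t, u :: v => ffact e u * (x i - z i) ^ (e - u) * dmono z t v (S i) x
  | _, _ => 1
  end.

Lemma dmono_local z b a i x y :
  (forall c, (i <= c)%nat -> x c = y c) -> dmono z b a i x = dmono z b a i y.
Proof.
  revert a i; induction b as [|e t IH]; intros [|u v] i H; simpl; auto.
  rewrite (H i), (IH v (S i)) by (auto; intros; apply H; lia). reflexivity.
Qed.

Lemma dmono_repeat0 z b i x :
  dmono z b (repeat 0%nat (length b)) i x = monoAux b i (fun c => x c - z c).
Proof. revert i; induction b; intros i; simpl; auto. rewrite IHb, ffact_0, Nat.sub_0_r. ring. Qed.

Lemma derivable_pt_lim_dmono z b : forall a i c x, length a = length b -> (c < length b)%nat ->
  derivable_pt_lim (fun t => dmono z b a i (upd x (i + c) t)) (x (i + c)%nat)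
    (dmono z b (incr a c) i x).
Proof.
  induction b as [|e t IH]; intros [|u v] i c x Hl Hc; simpl in *; try lia.
  destruct c as [|c].
  - rewrite Nat.add_0_r. simpl incr. simpl dmono.
    apply (derivable_pt_lim_ext (fun s => (ffact e u * dmono z t v (S i) x) * (s - z i) ^ (e - u))).
    { intros s. rewrite upd_same, (dmono_local z t v (S i) (upd x i s) x); [ring|].
      intros; apply upd_other; lia. }
    rewrite <- ffact_step.
    replace (ffact e u * (INR (e - u) * (x i - z i) ^ pred (e - u)) * dmono z t v (S i) x)
      with (ffact e u * dmono z t v (S i) x * (INR (e - u) * (x i - z i) ^ pred (e - u))) by ring.
    apply derivable_pt_lim_scal_l, derivable_pt_lim_pow_shift.
  - simpl incr. simpl dmono. replace (i + S c)%nat with (S i + c)%nat by lia.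
    apply (derivable_pt_lim_ext
             (fun s => (ffact e u * (x i - z i) ^ (e - u)) * dmono z t v (S i) (upd x (S i + c) s))).
    { intros s. rewrite upd_other by lia. reflexivity. }
    apply derivable_pt_lim_scal_l. apply IH; lia.
Qed.

Lemma dmono_at_center z b : forall a i, length a = length b ->
  dmono z b a i z = if mi_eq_dec b a then INR (mi_fact a) else 0.
Proof.
  induction b as [|e t IH]; intros [|u v] i Hl; cbn [dmono length] in *; try lia.
  - destruct (mi_eq_dec [] []); [reflexivity | congruence].
  - rewrite IH, Rminus_diag by lia.
    destruct (mi_eq_dec (e :: t) (u :: v)) as [E|E].
    + injection E as -> ->. destruct (mi_eq_dec v v) as [_|]; [|congruence].
      unfold ffact. rewrite Nat.sub_diag, Nat.leb_refl, mi_fact_cons, mult_INR.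
      simpl. field.
    + destruct (mi_eq_dec t v) as [->|Hne]; [|ring].
      destruct (Nat.eq_dec e u); [subst; congruence|].
      unfold ffact. destruct (Nat.leb_spec u e); [|ring].
      replace (e - u)%nat with (S (e - u - 1)) by lia. simpl. ring.
Qed.

Lemma ContOn_dmono z d Om b : forall a i, (i + length b <= d)%nat -> ContOn d Om (dmono z b a i).
Proof.
  induction b as [|e t IH]; intros [|u v] i Hl; simpl in *; try apply ContOn_const.
  apply (ContOn_mult d Om (fun x => ffact e u * (x i - z i) ^ (e - u))); [|apply IH; lia].
  apply (ContOn_mult d Om (fun _ => ffact e u)); [apply ContOn_const|].
  apply (ContOn_pow d Om (fun x => x i - z i)). apply ContOn_coord. lia.
Qed.

Definition PolyRep (d n : nat) (g : Pt -> R) : Prop :=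
  exists L : list (R * MI),
    (forall p, In p L -> length (snd p) = d /\ (mi_abs (snd p) < n)%nat) /\
    forall x, g x = sumL L (fun p => fst p * mono (snd p) x).

Lemma poly_of_PolyRep d q g : PolyRep d q g -> exists cf, forall x, poly d q cf x = g x.
Proof.
  intros [L [HL Hg]]. exists (fun a => sumL L (fun p => if mi_eq_dec a (snd p) then fst p else 0)).
  intros x. rewrite Hg. unfold poly.
  rewrite (sumL_ext_in _ _
             (fun a => sumL L (fun p => if mi_eq_dec a (snd p) then fst p * mono a x else 0))).
  2:{ intros a _. rewrite Rmult_comm, <- sumL_scal. apply sumL_ext_in. intros p _.
      destruct (mi_eq_dec a (snd p)); ring. }
  rewrite sumL_swap. apply sumL_ext_in. intros p Hp.
  apply (sumL_delta mi_eq_dec _ _ (fun a => fst p * mono a x)); [apply NoDup_mi_lt|].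
  apply In_mi_lt, HL; auto.
Qed.

Lemma PolyRep_le d n n' g : (n <= n')%nat -> PolyRep d n g -> PolyRep d n' g.
Proof. intros H [L [HL Hg]]. exists L. split; auto. intros p Hp. specialize (HL p Hp). lia. Qed.

Lemma PolyRep_shifted_mono d (z : Pt) : forall m b, length b = d -> mi_abs b = m ->
  PolyRep d (S m) (fun x => mono b (fun c => x c - z c)).
Proof.
  induction m; intros b Hl Hs.
  - exists [(1, repeat 0%nat d)]. split.
    + intros p [<-|[]]. simpl. rewrite repeat_length, mi_abs_repeat0. auto.
    + intros x. apply mi_abs0_repeat in Hs. rewrite Hs, Hl, sumL_cons, sumL_nil. simpl.
      unfold mono. rewrite !monoAux_repeat0. ring.
  - destruct (mi_abs_S_incr b m Hs) as [i [b' [Hi [Hl' [Hs' ->]]]]].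
    destruct (IHm b' ltac:(lia) Hs') as [L [HL Hg]].
    (* (x_i - z_i) * q(x) expands into x_i * q(x) - z_i * q(x) *)
    exists (map (fun p => (fst p, incr (snd p) i)) L ++ map (fun p => (- z i * fst p, snd p)) L).
    split.
    + intros p Hp. apply in_app_or in Hp.
      destruct Hp as [Hp|Hp]; apply in_map_iff in Hp; destruct Hp as [p' [<- Hp']];
        destruct (HL p' Hp'); simpl; split; auto; try lia.
      * rewrite incr_length; auto.
      * rewrite incr_abs; lia.
    + intros x. rewrite sumL_app, !sumL_map. simpl.
      rewrite mono_incr by (rewrite incr_length in Hi; lia). rewrite Hg.
      rewrite (sumL_ext_in _ (fun p => fst p * mono (incr (snd p) i) x)
                 (fun p => x i * (fst p * mono (snd p) x))).
      2:{ intros p Hp. destruct (HL p Hp). rewrite mono_incr by lia. ring. }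
      rewrite (sumL_ext_in _ (fun p => - z i * fst p * mono (snd p) x)
                 (fun p => - z i * (fst p * mono (snd p) x))) by (intros; ring).
      rewrite !sumL_scal. ring.
Qed.

Lemma PolyRep_shifted_sum d n (z : Pt) (l : list MI) (coef : MI -> R) :
  (forall b, In b l -> length b = d /\ (mi_abs b < n)%nat) ->
  PolyRep d n (fun x => sumL l (fun b => coef b * mono b (fun c => x c - z c))).
Proof.
  induction l as [|b l IH]; intros H.
  - exists []. split; [intros p [] | intros; reflexivity].
  - destruct (H b ltac:(simpl; auto)) as [Hb1 Hb2].
    assert (Hle : (S (mi_abs b) <= n)%nat) by lia.
    destruct (PolyRep_le d _ n _ Hle (PolyRep_shifted_mono d z (mi_abs b) b Hb1 eq_refl))
      as [Lb [HLb Hgb]].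
    destruct (IH ltac:(intros; apply H; simpl; auto)) as [L [HL Hg]].
    exists (map (fun p => (coef b * fst p, snd p)) Lb ++ L). split.
    + intros p Hp. apply in_app_or in Hp. destruct Hp as [Hp|Hp]; auto.
      apply in_map_iff in Hp. destruct Hp as [p' [<- Hp']]. simpl. auto.
    + intros x. rewrite sumL_cons, sumL_app, sumL_map, Hgb, Hg. simpl.
      rewrite <- sumL_scal. f_equal. apply sumL_ext_in; intros; ring.
Qed.

Definition taylor_deriv_family (d r : nat) (F : MI -> Pt -> R) (z : Pt) (a : MI) (x : Pt) : R :=
  sumL (mi_lt d (S r)) (fun b => F b z / INR (mi_fact b) * dmono z b a 0 x).

Lemma DerivFamily_taylor_poly d k r (F : MI -> Pt -> R) z g :
  (forall x, g x = taylor_poly d r F z x) ->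
  DerivFamily d (fun _ => True) k g (taylor_deriv_family d r F z).
Proof.
  intros Hg. unfold taylor_deriv_family. split; [|split].
  - intros x _. rewrite Hg. unfold taylor_poly. apply sumL_ext_in. intros b Hb.
    apply In_mi_lt in Hb. destruct Hb as [Hl _]. rewrite <- Hl, dmono_repeat0. reflexivity.
  - intros a Hl Ha. apply ContOn_sumL. intros b Hb. apply In_mi_lt in Hb.
    apply (ContOn_mult d _ (fun _ => F b z / INR (mi_fact b))); [apply ContOn_const|].
    apply ContOn_dmono. lia.
  - intros a i x Hl Ha Hi _.
    apply (derivable_pt_lim_sumL (mi_lt d (S r))
             (fun b t => F b z / INR (mi_fact b) * dmono z b a 0 (upd x i t))
             (fun b _ => F b z / INR (mi_fact b) * dmono z b (incr a i) 0 x)).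
    intros b Hb. apply In_mi_lt in Hb. apply derivable_pt_lim_scal_l.
    apply (derivable_pt_lim_dmono z b a 0 i x); lia.
Qed.

Lemma Dop_taylor_deriv_family d k r c (F : MI -> Pt -> R) z : (k <= r)%nat ->
  Dop d k c (taylor_deriv_family d r F z) z = Dop d k c F z.
Proof.
  intros Hkr. unfold Dop. apply sumL_ext_in. intros a Ha. f_equal.
  apply In_mi_lt in Ha. destruct Ha as [Hl Ha]. unfold taylor_deriv_family.
  rewrite (sumL_ext_in _ _ (fun b => if mi_eq_dec b a then F b z / INR (mi_fact b) * INR (mi_fact b) else 0)).
  - rewrite sumL_delta; [field; apply mi_fact_neq0 | apply NoDup_mi_lt | apply In_mi_lt; lia].
  - intros b Hb. apply In_mi_lt in Hb. rewrite dmono_at_center by lia.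
    destruct (mi_eq_dec b a); subst; ring.
Qed.

Lemma exact_taylor_poly d N X k c z q w r (F : MI -> Pt -> R) :
  Exact d N X k c z q w -> (k <= r)%nat -> (r < q)%nat ->
  Dop d k c F z = sumN N (fun j => w j * taylor_poly d r F z (X j)).
Proof.
  intros Hex Hkr Hrq.
  destruct (poly_of_PolyRep d q (taylor_poly d r F z)) as [cf Hcf].
  { apply PolyRep_shifted_sum. intros b Hb. apply In_mi_lt in Hb. lia. }
  rewrite <- (Dop_taylor_deriv_family d k r c F z Hkr).
  rewrite (Hex cf _ (DerivFamily_taylor_poly d k r F z (poly d q cf) Hcf)).
  apply sumN_ext. intros j _. rewrite Hcf. reflexivity.
Qed.

(** * The error estimate *)

Lemma minimal_norm_eq_inf d N X k c z q mu w rho :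
  IsMinimal d N X k c z q mu w ->
  IsInf (fun v => exists w', Exact d N X k c z q w' /\ v = norm1mu d N X z mu w') rho ->
  rho = norm1mu d N X z mu w.
Proof.
  intros [Hex Hmin] [Hlb Hglb]. apply Rle_antisym.
  - apply Hlb. exists w; split; auto.
  - apply Hglb. intros v [w' [Hw' ->]]. apply Hmin; auto.
Qed.

Lemma HolderSet_nonneg d Om gam g v : HolderSet d Om gam g v -> 0 <= v.
Proof.
  intros [y [y' [_ [_ [_ ->]]]]].
  apply Rmult_le_pos; [apply Rabs_pos|]. unfold rpow.
  destruct (Req_EM_T (edist d y y') 0); [destruct (Req_EM_T gam 0)|].
  - rewrite Rinv_1; lra.
  - rewrite Rinv_0; lra.
  - left. apply Rinv_0_lt_compat, Rpower_gt0.
Qed.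

Lemma holder_lub_nonneg d Om gam g m : is_lub (HolderSet d Om gam g) m -> 0 <= m.
Proof.
  intros [Hub Hleast]. destruct (Rle_dec 0 m) as [|Hneg]; auto.
  (* every Hoelder quotient is >= 0 > m, so the set is empty and m - 1 bounds it too *)
  assert (m <= m - 1); [|lra].
  apply Hleast. intros v Hv. pose proof (Hub v Hv). pose proof (HolderSet_nonneg _ _ _ _ _ Hv). lra.
Qed.

Lemma holder_lub_bound d Om gam g m y y' : ContOn d Om g ->
  is_lub (HolderSet d Om gam g) m -> Om y -> Om y' ->
  Rabs (g y - g y') <= m * rpow (edist d y y') gam.
Proof.
  intros Hc Hm Hy Hy'. pose proof (holder_lub_nonneg _ _ _ _ _ Hm) as Hm0.
  destruct (Req_dec (edist d y y') 0) as [E|E].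
  - rewrite (ContOn_eq_of_edist0 d Om g y' y Hc Hy' Hy E), Rminus_diag, Rabs_R0.
    apply Rmult_le_pos; [auto | apply rpow_nonneg].
  - assert (Hp : 0 < edist d y y') by (pose proof (edist_nonneg d y y'); lra).
    assert (Hne : ~ pt_eq d y y') by (intros P; apply E, edist0_of_pt_eq, P).
    destruct Hm as [Hub _].
    pose proof (Hub _ (ex_intro _ y (ex_intro _ y' (conj Hy (conj Hy' (conj Hne eq_refl)))))) as Hb.
    rewrite rpow_pos in * by auto.
    pose proof (Rpower_gt0 (edist d y y') gam) as HR.
    apply (Rmult_le_compat_r (Rpower (edist d y y') gam)) in Hb; [|lra].
    unfold Rdiv in Hb. rewrite Rmult_assoc, Rinv_l, Rmult_1_r in Hb by lra. exact Hb.
Qed.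

Lemma error_le_taylor_remainders d N X k c z q w Om r gam f F M :
  Exact d N X k c z q w -> (k <= r)%nat -> (r < q)%nat -> IsOpen d Om -> 0 < gam <= 1 ->
  (forall j t, (j < N)%nat -> 0 <= t <= 1 -> Om (fun m => z m + t * (X j m - z m))) ->
  DerivFamily d Om r f F ->
  (forall a, In a (mi d r) -> is_lub (HolderSet d Om gam (F a)) (M a)) ->
  Rabs (Dop d k c F z - sumN N (fun j => w j * f (X j)))
  <= sumN N (fun j => Rabs (w j) *
       (semi d r gam M * edist d (X j) z ^ r * rpow (edist d (X j) z) gam)).
Proof.
  intros Hex Hkr Hrq HOm Hgam Hseg HF HM.
  rewrite (exact_taylor_poly d N X k c z q w r F Hex Hkr Hrq), <- sumN_minus.
  eapply Rle_trans; [apply sumN_abs|]. apply sumN_le. intros j Hj.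
  rewrite <- Rmult_minus_distr_l, Rabs_mult, Rabs_minus_sym.
  apply Rmult_le_compat_l; [apply Rabs_pos|].
  pose proof (proj1 (proj2 HF)) as HFc.
  apply (taylor_remainder_bound d Om r f F M gam z (X j)); auto.
  - intros a Ha. apply (holder_lub_nonneg d Om gam (F a)); auto.
  - intros a Ha y y' Hy Hy'. apply In_mi in Ha.
    apply (holder_lub_bound d Om); auto; [apply HFc; lia | apply HM, In_mi; auto].
Qed.

(* Splitting ||x_j - z||^(r+gamma) as ||x_j - z||^mu * ||x_j - z||^(r+gamma-mu). *)
Lemma weighted_remainders_le d N X z mu w r gam C P : 0 <= mu -> 0 < gam -> 0 <= C -> 0 <= P ->
  (forall j, (j < N)%nat -> w j <> 0 -> 0 < edist d (X j) z ->
     Rpower (edist d (X j) z) (INR r + gam - mu) <= P) ->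
  sumN N (fun j => Rabs (w j) * (C * edist d (X j) z ^ r * rpow (edist d (X j) z) gam))
  <= norm1mu d N X z mu w * P * C.
Proof.
  intros Hmu Hgam HC HP Hj. unfold norm1mu.
  rewrite Rmult_assoc, Rmult_comm, <- sumN_scal. apply sumN_le. intros j Hjn.
  set (e := edist d (X j) z). pose proof (Rabs_pos (w j)).
  destruct (Req_dec (w j) 0) as [Hw0|Hw0]; [rewrite Hw0, Rabs_R0; right; ring|].
  destruct (Req_dec e 0) as [He0|He0].
  { rewrite He0, rpow_0_l, !Rmult_0_r by lra.
    repeat apply Rmult_le_pos; auto. apply rpow_nonneg. }
  assert (Hep : 0 < e) by (pose proof (edist_nonneg d (X j) z); unfold e in *; lra).
  rewrite !rpow_pos, <- Rpower_pow by auto.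
  replace (C * Rpower e (INR r) * Rpower e gam)
    with (C * Rpower e mu * Rpower e (INR r + gam - mu))
    by (rewrite !Rmult_assoc, <- !Rpower_plus; f_equal; f_equal; ring).
  pose proof (Hj j Hjn Hw0 Hep). pose proof (Rpower_gt0 e mu).
  apply Rle_trans with (Rabs (w j) * (C * Rpower e mu * P)); [|right; ring].
  apply Rmult_le_compat_l; auto. apply Rmult_le_compat_l; [apply Rmult_le_pos; lra | auto].
Qed.

Lemma error_le_norm1mu_power_bound d N X k c z q mu w Om r gam f F M P :
  IsMinimal d N X k c z q mu w -> (k <= r)%nat -> (r < q)%nat -> IsOpen d Om ->
  0 <= mu -> 0 < gam <= 1 ->
  (forall j t, (j < N)%nat -> 0 <= t <= 1 -> Om (fun m => z m + t * (X j m - z m))) ->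
  DerivFamily d Om r f F ->
  (forall a, In a (mi d r) -> is_lub (HolderSet d Om gam (F a)) (M a)) ->
  0 <= P ->
  (forall j, (j < N)%nat -> w j <> 0 -> 0 < edist d (X j) z ->
     Rpower (edist d (X j) z) (INR r + gam - mu) <= P) ->
  Rabs (Dop d k c F z - sumN N (fun j => w j * f (X j)))
  <= norm1mu d N X z mu w * P * semi d r gam M.
Proof.
  intros [Hex _] Hkr Hrq HOm Hmu Hgam Hseg HF HM HP Hj.
  eapply Rle_trans; [apply (error_le_taylor_remainders d N X k c z q w Om r gam f F M); auto|].
  apply weighted_remainders_le; auto; [lra | apply semi_nonneg; lra].
Qed.

Theorem mainTheorem11
  (d N k q : nat) (c : MI -> R) (z : Pt) (X : nat -> Pt) (mu : R) (w : nat -> R)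
  (Hord : sumL (mi d k) (fun a => Rabs (c a)) <> 0)
  (Hdist : forall i j, (i < N)%nat -> (j < N)%nat -> i <> j -> ~ pt_eq d (X i) (X j))
  (Hmu : 0 <= mu) (Hqk : (k < q)%nat)
  (Hmin : IsMinimal d N X k c z q mu w)
  (Hnz : exists j, (j < N)%nat /\ w j <> 0 /\ ~ pt_eq d (X j) z)
  (Om : Pt -> Prop) (HOm : IsDomain d Om)
  (Hseg : forall j t, (j < N)%nat -> 0 <= t <= 1 ->
            Om (fun m => z m + t * (X j m - z m)))
  (rho : R)
  (Hrho : IsInf (fun v => exists w', Exact d N X k c z q w' /\ v = norm1mu d N X z mu w') rho)
  (h : R)
  (Hh : IsMax (fun t => exists j, (j < N)%nat /\ w j <> 0 /\ t = edist d (X j) z) h)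
  (s : R)
  (Hs : IsMin (fun t => exists j, (j < N)%nat /\ w j <> 0 /\ ~ pt_eq d (X j) z /\
                               t = edist d (X j) z) s) :
  forall (r : nat) (gam : R) (f : Pt -> R) (F : MI -> Pt -> R) (M : MI -> R),
    (k <= r)%nat -> (r <= q - 1)%nat -> 0 < gam <= 1 ->
    DerivFamily d Om r f F ->
    (forall a, In a (mi d r) -> is_lub (HolderSet d Om gam (F a)) (M a)) ->
    let err := Rabs (Dop d k c F z - sumN N (fun j => w j * f (X j))) in
    (mu <= INR r + gam -> err <= rho * Rpower h (INR r + gam - mu) * semi d r gam M) /\
    (INR r + gam < mu -> err <= rho * Rpower s (INR r + gam - mu) * semi d r gam M) /\
    (mu = INR r + gam -> err <= rho * semi d r gam M).
Proof.
  intros r gam f F M Hkr Hrq Hgam HF HM err.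
  rewrite (minimal_norm_eq_inf d N X k c z q mu w rho Hmin Hrho).
  assert (Herr := fun P => error_le_norm1mu_power_bound d N X k c z q mu w Om r gam f F M P
                             Hmin Hkr ltac:(lia) (proj1 HOm) Hmu Hgam Hseg HF HM).
  destruct Hh as [[jh [_ [_ ->]]] Hhmax].
  assert (Hcase1 : mu <= INR r + gam -> err <= norm1mu d N X z mu w *
            Rpower (edist d (X jh) z) (INR r + gam - mu) * semi d r gam M).
  { intros Hle. apply Herr; [left; apply Rpower_gt0|].
    intros j Hj Hw Hep. apply Rle_Rpower_l; [lra|]. split; auto. apply Hhmax. eauto. }
  split; [exact Hcase1 | split].
  - intros Hlt. destruct Hs as [[js [_ [_ [Hxjs ->]]]] Hsmin].
    apply Herr; [left; apply Rpower_gt0|]. intros j Hj Hw Hep.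
    pose proof (edist_pos_of_not_pt_eq d _ _ Hxjs).
    assert (edist d (X js) z <= edist d (X j) z).
    { apply Hsmin. exists j. repeat split; auto.
      intros Heq. pose proof (edist0_of_pt_eq _ _ _ Heq). lra. }
    apply Rpower_le_nonpos_exp; lra.
  - intros Heq.
    assert (Hhpos : 0 < edist d (X jh) z).
    { destruct Hnz as [j0 [Hj0 [Hw0 Hx0]]]. pose proof (edist_pos_of_not_pt_eq d _ _ Hx0).
      pose proof (Hhmax (edist d (X j0) z) (ex_intro _ j0 (conj Hj0 (conj Hw0 eq_refl)))). lra. }
    pose proof (Hcase1 ltac:(lra)) as H1.
    replace (INR r + gam - mu) with 0 in H1 by lra.
    rewrite Rpower_O, Rmult_1_r in H1; auto.
Qed.
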